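(* Assume $\|\cdot\|=|||\cdot|||=\|\cdot\|_2$. Then: (a) For $L_1,L_2\in\mathrm{Gr}(V,m)$, $\|\Pi_{L_1}-\Pi_{L_2}\|_2=\operatorname{dist}(L_1,L_2)=\overline{\operatorname{dist}}(L_1,L_2)$, where $\Pi_{L_i}$ is the orthogonal projection onto $L_i$ and $\|\Pi_{L_1}-\Pi_{L_2}\|_2=\max_{\|x\|_2=1}\|(\Pi_{L_1}-\Pi_{L_2})x\|_2$. (b) If $L\in\mathrm{Gr}(V,m)$ and $L\cap\operatorname{int}(K)\neq\emptyset$, then $\nu(L)=\sin\angle(L^\perp,K^* )$. (c) If $L\in\mathrm{Gr}(V,m)$ and $L^\perp\cap\operatorname{int}(K^* )\neq\emptyset$, then $\bar\nu(L)=\sin\angle(L,K)$.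
   Context: $V$ is a finite-dimensional real vector space with inner product $\langle\cdot,\cdot\rangle$ and Euclidean norm $\|v\|_2=\sqrt{\langle v,v\rangle}$; $K\subseteq V$ is a regular closed convex cone with dual cone $K^*:=\{u:\langle u,x\rangle\ge0\ \forall x\in K\}$; $\mathrm{Gr}(V,m)$ is the set of $m$-dimensional subspaces ($1\le m<\dim V$), $L^\perp$ the orthogonal complement. With norms $\|\cdot\|,|||\cdot|||$ on $V$ (dual norms $\|u\|^*:=\max_{\|x\|=1}\langle u,x\rangle$, similarly $|||\cdot|||^*$): $\operatorname{dist}(L_1,L_2):=\max_{x\in L_1,x\neq0}\min_{v\in L_2}\frac{|||x-v|||}{\|x\|}$, $\overline{\operatorname{dist}}(L_1,L_2):=\max_{x\in L_1,x\neq0}\inf_{v\in L_2,v\neq0}\frac{|||x-v|||}{\|v\|}$, $\nu(L):=\min\{\|y-u\|^*:u\in K^*,y\in L^\perp,|||u|||^*=1\}$, $\bar\nu(L):=\min\{|||v-x|||:v\in K,x\in L,\|x\|=1\}$. For $x,y\neq0$, $\angle(x,y):=\arccos\frac{\langle x,y\rangle}{\|x\|_2\|y\|_2}\in[0,\pi]$; for a linear subspace $L$ and closed convex cone $C$, $\angle(L,C):=\min\{\angle(x,v):x\in L\setminus\{0\},v\in C\setminus\{0\}\}$. *)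

From Stdlib Require Import Reals Lra.
Open Scope R_scope.

(* V = R^n, represented by functions nat -> R vanishing at indices >= n,
   with the standard (Euclidean) inner product. *)
Definition vec := nat -> R.

Definition isvec (n : nat) (x : vec) : Prop := forall i, (n <= i)%nat -> x i = 0.

Fixpoint vsum (n : nat) (f : nat -> R) : R :=
  match n with O => 0 | S k => vsum k f + f k end.

Definition inner (n : nat) (x y : vec) : R := vsum n (fun i => x i * y i).
Definition norm2 (n : nat) (x : vec) : R := sqrt (inner n x x).

Definition vsub (x y : vec) : vec := fun i => x i - y i.
Definition vzero : vec := fun _ => 0.
Definition nonzero (n : nat) (x : vec) : Prop := exists i, (i < n)%nat /\ x i <> 0.

Definition lincomb (m : nat) (c : nat -> R) (b : nat -> vec) : vec :=
  fun i => vsum m (fun j => c j * b j i).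

Definition Gr (n m : nat) (L : vec -> Prop) : Prop :=
  exists b : nat -> vec,
    (forall j, (j < m)%nat -> isvec n (b j)) /\
    (forall c, (forall i, lincomb m c b i = 0) -> forall j, (j < m)%nat -> c j = 0) /\
    (forall x, L x <-> exists c, forall i, x i = lincomb m c b i).

Definition perp (n : nat) (L : vec -> Prop) : vec -> Prop :=
  fun x => isvec n x /\ forall y, L y -> inner n x y = 0.

Definition is_proj (n : nat) (L : vec -> Prop) (x p : vec) : Prop :=
  L p /\ forall y, L y -> inner n (vsub x p) y = 0.

Definition vinterior (n : nat) (K : vec -> Prop) : vec -> Prop :=
  fun x => isvec n x /\ exists eps, eps > 0 /\
    forall y, isvec n y -> norm2 n (vsub y x) < eps -> K y.

Definition closed_set (n : nat) (K : vec -> Prop) : Prop :=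
  forall x, isvec n x ->
    (forall eps, eps > 0 -> exists y, K y /\ norm2 n (vsub x y) < eps) -> K x.

Definition regular_cone (n : nat) (K : vec -> Prop) : Prop :=
  (forall x, K x -> isvec n x) /\
  K vzero /\
  (forall x t, K x -> t >= 0 -> K (fun i => t * x i)) /\
  (forall x y, K x -> K y -> K (fun i => x i + y i)) /\
  closed_set n K /\
  (forall x, K x -> K (fun i => - x i) -> forall i, x i = 0) /\
  (exists x, vinterior n K x).

Definition dual_cone (n : nat) (K : vec -> Prop) : vec -> Prop :=
  fun u => isvec n u /\ forall x, K x -> inner n u x >= 0.

Definition is_max (S : R -> Prop) (a : R) : Prop := S a /\ forall y, S y -> y <= a.
Definition is_min (S : R -> Prop) (a : R) : Prop := S a /\ forall y, S y -> a <= y.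
Definition is_inf (S : R -> Prop) (a : R) : Prop :=
  (forall y, S y -> a <= y) /\ (forall b, (forall y, S y -> b <= y) -> b <= a).

Definition dualnorm_is (n : nat) (u : vec) (r : R) : Prop :=
  is_max (fun s => exists x, isvec n x /\ norm2 n x = 1 /\ s = inner n u x) r.

(* ||Pi_L1 - Pi_L2||_2 = max_{||x||_2=1} ||(Pi_L1 - Pi_L2) x||_2 : set of values *)
Definition proj_diff_set (n : nat) (L1 L2 : vec -> Prop) : R -> Prop :=
  fun r => exists x p1 p2, isvec n x /\ norm2 n x = 1 /\
    is_proj n L1 x p1 /\ is_proj n L2 x p2 /\ r = norm2 n (vsub p1 p2).

(* dist(L1,L2) = max_{x in L1\0} min_{v in L2} |||x-v||| / ||x|| *)
Definition dist_set (n : nat) (L1 L2 : vec -> Prop) : R -> Prop :=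
  fun r => exists x, L1 x /\ nonzero n x /\
    is_min (fun s => exists v, L2 v /\ s = norm2 n (vsub x v) / norm2 n x) r.

(* distbar(L1,L2) = max_{x in L1\0} inf_{v in L2\0} |||x-v||| / ||v|| *)
Definition distbar_set (n : nat) (L1 L2 : vec -> Prop) : R -> Prop :=
  fun r => exists x, L1 x /\ nonzero n x /\
    is_inf (fun s => exists v, L2 v /\ nonzero n v /\ s = norm2 n (vsub x v) / norm2 n v) r.

(* nu(L) = min { ||y-u||^* : u in K^*, y in L^perp, |||u|||^* = 1 } *)
Definition nu_set (n : nat) (K L : vec -> Prop) : R -> Prop :=
  fun r => exists u y, dual_cone n K u /\ perp n L y /\
    dualnorm_is n u 1 /\ dualnorm_is n (vsub y u) r.

(* nubar(L) = min { |||v-x||| : v in K, x in L, ||x|| = 1 } *)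
Definition nubar_set (n : nat) (K L : vec -> Prop) : R -> Prop :=
  fun r => exists v x, K v /\ L x /\ norm2 n x = 1 /\ r = norm2 n (vsub v x).

Definition angle (n : nat) (x y : vec) : R :=
  acos (inner n x y / (norm2 n x * norm2 n y)).

(* angle(L,C) = min { angle(x,v) : x in L\0, v in C\0 } : set of values *)
Definition angle_set (n : nat) (L C : vec -> Prop) : R -> Prop :=
  fun r => exists x v, L x /\ nonzero n x /\ C v /\ nonzero n v /\ r = angle n x v.

(* Everything reduces to Euclidean geometry of orthogonal projections.
   (a) Let [a] be the largest squared distance to [L2] of a unit vector of [L1], and [b] the same
   with the roles exchanged. As [dim L1 = dim L2], [a < 1] makes the projection [L1 -> L2] onto,
   and pulling back a unit vector of [L2] shows [b <= a]; hence [a = b]. Writing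
   [z = P1 z + (z - P1 z)] gives [|P1 z - P2 z|^2 <= a |P1 z|^2 + b |z - P1 z|^2 = a |z|^2], while
   both [dist] and [distbar] evaluate to [sqrt a], the inner extremum being taken along [P2 x].
   (b), (c) By compactness there are unit vectors [x] of the subspace and [v] of the cone with
   maximal cosine [c = <x, v>], which is [>= 0] since the subspace is symmetric, so the minimal
   angle is [acos c]. For a unit [y] of the subspace and [w] in the cone,
   [|w - y|^2 >= |w|^2 - 2 c |w| + 1 >= 1 - c^2], with equality at [w = c v, y = x]; hence the
   distance is [sqrt (1 - c^2) = sin (acos c)]. *)

From Pilot Require Import Defs.
From Stdlib Require Import Reals Lra Lia List Classical ClassicalEpsilon FunctionalExtensionality.
Open Scope R_scope.

(** * Finite sums *)

Lemma vsum_ext n f g : (forall i, (i < n)%nat -> f i = g i) -> vsum n f = vsum n g.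
Proof. induction n; simpl; intros H; auto. rewrite IHn by (intros; apply H; lia). rewrite H by lia. auto. Qed.

Lemma vsum_add n f g : vsum n (fun i => f i + g i) = vsum n f + vsum n g.
Proof. induction n; simpl; [lra|]. rewrite IHn. lra. Qed.

Lemma vsum_sub n f g : vsum n (fun i => f i - g i) = vsum n f - vsum n g.
Proof. induction n; simpl; [lra|]. rewrite IHn. lra. Qed.

Lemma vsum_scal n c f : vsum n (fun i => c * f i) = c * vsum n f.
Proof. induction n; simpl; [lra|]. rewrite IHn. lra. Qed.

Lemma vsum_eq0 n f : (forall i, (i < n)%nat -> f i = 0) -> vsum n f = 0.
Proof. induction n; simpl; intros H; auto. rewrite IHn by (intros; apply H; lia). rewrite H by lia. lra. Qed.

Lemma vsum_ge0 n f : (forall i, (i < n)%nat -> 0 <= f i) -> 0 <= vsum n f.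
Proof.
  induction n; simpl; intros H; [lra|].
  specialize (IHn (fun i h => H i ltac:(lia))). specialize (H n ltac:(lia)). lra.
Qed.

Lemma vsum_ge0_eq0 n f : (forall i, (i < n)%nat -> 0 <= f i) -> vsum n f = 0 ->
  forall i, (i < n)%nat -> f i = 0.
Proof.
  induction n; simpl; intros H H0 i Hi; [lia|].
  assert (A := vsum_ge0 n f (fun i h => H i ltac:(lia))).
  assert (B := H n ltac:(lia)).
  destruct (Nat.eq_dec i n); [subst; lra|].
  apply IHn; auto; [lra|lia].
Qed.

Lemma vsum_swap n m (f : nat -> nat -> R) :
  vsum n (fun i => vsum m (fun j => f i j)) = vsum m (fun j => vsum n (fun i => f i j)).
Proof.
  induction n; simpl.
  - symmetry; apply vsum_eq0; auto.
  - rewrite IHn, <- vsum_add. auto.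
Qed.

Lemma vsum_delta n k a : (k < n)%nat -> vsum n (fun i => if Nat.eqb i k then a else 0) = a.
Proof.
  induction n; simpl; intros H; [lia|].
  destruct (Nat.eqb_spec n k).
  - subst. rewrite vsum_eq0; [lra|]. intros i Hi. destruct (Nat.eqb_spec i k); [lia|auto].
  - rewrite IHn by lia. lra.
Qed.

(** * The Euclidean inner product *)

Definition vadd (x y : vec) : vec := fun i => x i + y i.
Definition vscal (t : R) (x : vec) : vec := fun i => t * x i.

Lemma vsub_vadd_opp x y : vsub x y = vadd x (vscal (-1) y).
Proof. apply functional_extensionality; intros; unfold vsub, vadd, vscal; ring. Qed.

Section Inner.
Variable n : nat.
Notation ip := (inner n).
Notation nrm := (norm2 n).

Lemma inner_sym x y : ip x y = ip y x.
Proof. unfold inner. apply vsum_ext; intros; ring. Qed.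

Lemma inner_addl x y z : ip (vadd x y) z = ip x z + ip y z.
Proof. unfold inner, vadd. rewrite <- vsum_add. apply vsum_ext; intros; ring. Qed.

Lemma inner_subl x y z : ip (vsub x y) z = ip x z - ip y z.
Proof. unfold inner, vsub. rewrite <- vsum_sub. apply vsum_ext; intros; ring. Qed.

Lemma inner_scall t x z : ip (vscal t x) z = t * ip x z.
Proof. unfold inner, vscal. rewrite <- vsum_scal. apply vsum_ext; intros; ring. Qed.

Lemma inner_addr x y z : ip z (vadd x y) = ip z x + ip z y.
Proof. rewrite inner_sym, inner_addl, (inner_sym x), (inner_sym y). auto. Qed.

Lemma inner_subr x y z : ip z (vsub x y) = ip z x - ip z y.
Proof. rewrite inner_sym, inner_subl, (inner_sym x), (inner_sym y). auto. Qed.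

Lemma inner_scalr t x z : ip z (vscal t x) = t * ip z x.
Proof. rewrite inner_sym, inner_scall, (inner_sym x). auto. Qed.

Lemma inner_vsub_self x y : ip (vsub x y) (vsub x y) = ip x x - 2 * ip x y + ip y y.
Proof. rewrite inner_subl, !inner_subr, (inner_sym y x). ring. Qed.

Lemma inner_self_ge0 x : 0 <= ip x x.
Proof. apply vsum_ge0. intros; apply Rle_0_sqr. Qed.

Lemma inner_self_eq0 x : ip x x = 0 -> forall i, (i < n)%nat -> x i = 0.
Proof.
  intros H i Hi.
  assert (A := vsum_ge0_eq0 n (fun i => x i * x i) (fun i _ => Rle_0_sqr (x i)) H i Hi).
  simpl in A. nra.
Qed.

Lemma inner_eq0l x y : (forall i, (i < n)%nat -> x i = 0) -> ip x y = 0.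
Proof. intros H. apply vsum_eq0. intros i Hi. rewrite H; auto; ring. Qed.

Lemma isvec_ext x y : isvec n x -> isvec n y -> (forall i, (i < n)%nat -> x i = y i) -> x = y.
Proof.
  intros Hx Hy H. apply functional_extensionality. intros i.
  destruct (Nat.lt_ge_cases i n); auto. rewrite Hx, Hy; auto.
Qed.

Lemma isvec_inner_self_eq0 x : isvec n x -> ip x x = 0 -> x = vzero.
Proof.
  intros Hx H. apply isvec_ext; auto; [intros i _; reflexivity|].
  intros; apply inner_self_eq0; auto.
Qed.

Lemma isvec_vscal t x : isvec n x -> isvec n (vscal t x).
Proof. intros H i Hi. unfold vscal. rewrite H; auto; ring. Qed.

Lemma isvec_vadd x y : isvec n x -> isvec n y -> isvec n (vadd x y).
Proof. intros H H' i Hi. unfold vadd. rewrite H, H'; auto; ring. Qed.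

Lemma isvec_vsub x y : isvec n x -> isvec n y -> isvec n (vsub x y).
Proof. intros H H' i Hi. unfold vsub. rewrite H, H'; auto; ring. Qed.

Lemma cauchy_schwarz_sq x y : (ip x y)^2 <= ip x x * ip y y.
Proof.
  destruct (Req_dec (ip y y) 0) as [H|H].
  - rewrite (inner_sym x y), inner_eq0l, H; [nra|]. apply inner_self_eq0; auto.
  - assert (Hp : 0 < ip y y) by (assert (A := inner_self_ge0 y); lra).
    set (t := ip x y / ip y y).
    assert (A := inner_self_ge0 (vsub x (vscal t y))).
    rewrite inner_vsub_self, inner_scalr, !inner_scall, inner_scalr in A.
    assert (E : ip x x - 2 * (t * ip x y) + t * (t * ip y y) = ip x x - ip x y ^ 2 / ip y y)
      by (unfold t; field; lra).
    assert (G : ip x y ^ 2 / ip y y * ip y y = ip x y ^ 2) by (field; lra).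
    nra.
Qed.

Lemma norm2_ge0 x : 0 <= nrm x.
Proof. apply sqrt_pos. Qed.

Lemma norm2_sq x : nrm x * nrm x = ip x x.
Proof. apply sqrt_sqrt, inner_self_ge0. Qed.

Lemma norm2_of_sq x r : 0 <= r -> ip x x = r * r -> nrm x = r.
Proof. intros. unfold norm2. rewrite H0. apply sqrt_square; auto. Qed.

Lemma norm2_eq1 x : nrm x = 1 <-> ip x x = 1.
Proof. split; intros H; [rewrite <- norm2_sq, H; ring | apply norm2_of_sq; lra]. Qed.

Lemma cauchy_schwarz x y : ip x y <= nrm x * nrm y.
Proof.
  assert (A := cauchy_schwarz_sq x y). rewrite <- !norm2_sq in A.
  assert (B := norm2_ge0 x). assert (C := norm2_ge0 y).
  destruct (Rle_dec (ip x y) 0); [nra|].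
  apply Rsqr_incr_0_var; unfold Rsqr; nra.
Qed.

Lemma norm2_scal t x : nrm (vscal t x) = Rabs t * nrm x.
Proof.
  apply norm2_of_sq; [apply Rmult_le_pos; [apply Rabs_pos|apply norm2_ge0]|].
  rewrite inner_scall, inner_scalr, <- norm2_sq.
  replace (Rabs t * nrm x * (Rabs t * nrm x)) with ((Rabs t * Rabs t) * (nrm x * nrm x)) by ring.
  rewrite <- Rabs_mult, Rabs_pos_eq by nra. ring.
Qed.

Lemma cauchy_schwarz_lower x y : - (nrm x * nrm y) <= ip x y.
Proof.
  assert (A := cauchy_schwarz (vscal (-1) x) y).
  rewrite inner_scall, norm2_scal, Rabs_left in A by lra. lra.
Qed.

Lemma nonzero_norm2_gt0 x : Defs.nonzero n x -> 0 < nrm x.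
Proof.
  intros [i [Hi Hx]]. destruct (norm2_ge0 x) as [|H]; auto.
  exfalso. apply Hx. apply inner_self_eq0; auto. rewrite <- norm2_sq, <- H. ring.
Qed.

Lemma norm2_gt0_nonzero x : 0 < nrm x -> Defs.nonzero n x.
Proof.
  intros H. apply NNPP; intros C.
  assert (ip x x = 0).
  { apply inner_eq0l. intros i Hi. apply NNPP; intros D. apply C; exists i; auto. }
  rewrite <- norm2_sq in H0. nra.
Qed.

Lemma nonzero_or_zero x : Defs.nonzero n x \/ forall i, (i < n)%nat -> x i = 0.
Proof.
  destruct (classic (Defs.nonzero n x)); auto. right. intros i Hi.
  apply NNPP; intros C. apply H. exists i; auto.
Qed.

Lemma norm2_normalize x : Defs.nonzero n x -> nrm (vscal (/ nrm x) x) = 1.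
Proof.
  intros H. assert (A := nonzero_norm2_gt0 x H). rewrite norm2_scal.
  rewrite Rabs_pos_eq; [field; lra|]. left; apply Rinv_0_lt_compat; auto.
Qed.

Lemma unit_in_positive_cone (C : vec -> Prop) x :
  (forall t y, 0 < t -> C y -> C (vscal t y)) ->
  C x -> Defs.nonzero n x -> exists y, C y /\ ip y y = 1.
Proof.
  intros Hs Hx nz. exists (vscal (/ nrm x) x). split.
  - apply Hs; auto. apply Rinv_0_lt_compat, nonzero_norm2_gt0; auto.
  - apply norm2_eq1, norm2_normalize; auto.
Qed.

End Inner.

(** * Linear systems and subspaces *)

Lemma homogeneous_system_nontrivial : forall p (rows : list (nat -> R)), (length rows < p)%nat ->
  exists c, (exists j, (j < p)%nat /\ c j <> 0) /\
    forall r, In r rows -> vsum p (fun j => r j * c j) = 0.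
Proof.
  induction p as [|p IH]; intros rows Hl; [simpl in Hl; lia|].
  destruct (classic (exists r, In r rows /\ r p <> 0)) as [[r0 [Hin Hr0]]|Hno].
  - (* eliminate the last unknown using the row [r0] *)
    destruct (in_split r0 rows Hin) as [l1 [l2 Heq]].
    set (elim := fun r j => r j - r p / r0 p * r0 j).
    set (rows' := map elim (l1 ++ l2)).
    assert (Hl' : (length rows' < p)%nat).
    { unfold rows'. rewrite length_map, length_app. subst rows.
      rewrite length_app in Hl. simpl in Hl. lia. }
    destruct (IH rows' Hl') as [c' [[j0 [Hj0 Hc0]] Heqs]].
    set (S0 := vsum p (fun j => r0 j * c' j)).
    exists (fun j => if Nat.eqb j p then - S0 / r0 p else c' j). split.
    + exists j0. split; [lia|]. destruct (Nat.eqb_spec j0 p); [lia|auto].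
    + intros r Hr. simpl. rewrite Nat.eqb_refl.
      rewrite (vsum_ext p _ (fun j => r j * c' j)).
      2:{ intros i Hi. destruct (Nat.eqb_spec i p); [lia|auto]. }
      subst rows. apply in_app_or in Hr. destruct Hr as [Hr|[Hr|Hr]].
      3,1: (assert (Hr' : In (elim r) rows')
              by (unfold rows'; apply in_map; apply in_or_app; auto);
            specialize (Heqs _ Hr'); unfold elim in Heqs;
            rewrite (vsum_ext p _ (fun j => r j * c' j - r p / r0 p * (r0 j * c' j))) in Heqs
              by (intros; ring);
            rewrite vsum_sub, vsum_scal in Heqs; fold S0 in Heqs;
            field_simplify; [|auto];
            replace (vsum p (fun j => r j * c' j)) with (r p / r0 p * S0) by lra;
            field; auto).
      subst r. fold S0. field. auto.
  - exists (fun j => if Nat.eqb j p then 1 else 0). split.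
    + exists p. split; [lia|]. rewrite Nat.eqb_refl. lra.
    + intros r Hr. simpl. rewrite Nat.eqb_refl.
      assert (r p = 0) by (apply NNPP; intro C; apply Hno; eauto).
      rewrite vsum_eq0; [rewrite H; ring|].
      intros i Hi. destruct (Nat.eqb_spec i p); [lia|ring].
Qed.

Lemma square_system_surjective m (A : nat -> nat -> R) :
  (forall c, (forall k, (k < m)%nat -> vsum m (fun j => A k j * c j) = 0) ->
     forall j, (j < m)%nat -> c j = 0) ->
  forall y, exists c, forall k, (k < m)%nat -> vsum m (fun j => A k j * c j) = y k.
Proof.
  intros Hinj y.
  (* a nontrivial solution of the homogeneous system [A c = y c_m] in m+1 unknowns has c_m <> 0 *)
  set (row := fun k j => if Nat.ltb j m then A k j else - y k).
  set (rows := map row (seq 0 m)).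
  assert (Hl : (length rows < S m)%nat) by (unfold rows; rewrite length_map, length_seq; lia).
  destruct (homogeneous_system_nontrivial (S m) rows Hl) as [c [[j0 [Hj0 Hc0]] Heqs]].
  assert (E : forall k, (k < m)%nat -> vsum m (fun j => A k j * c j) - y k * c m = 0).
  { intros k Hk. assert (Hin : In (row k) rows) by (apply in_map, in_seq; lia).
    specialize (Heqs _ Hin). simpl in Heqs. unfold row in Heqs at 2.
    rewrite Nat.ltb_irrefl, (vsum_ext m _ (fun j => A k j * c j)) in Heqs; [lra|].
    intros i Hi. unfold row. apply Nat.ltb_lt in Hi. rewrite Hi. auto. }
  destruct (Req_dec (c m) 0) as [Hm|Hm].
  - exfalso. assert (forall j, (j < m)%nat -> c j = 0).
    { apply Hinj. intros k Hk. specialize (E k Hk). rewrite Hm in E. lra. }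
    destruct (Nat.eq_dec j0 m); [subst; auto|]. apply Hc0, H. lia.
  - exists (fun j => c j / c m). intros k Hk.
    rewrite (vsum_ext m _ (fun j => / c m * (A k j * c j))) by (intros; unfold Rdiv; ring).
    rewrite vsum_scal. specialize (E k Hk). field_simplify; auto.
    replace (vsum m (fun j => A k j * c j)) with (y k * c m) by lra. field; auto.
Qed.

Definition linear_set (n : nat) (L : vec -> Prop) : Prop :=
  (forall x, L x -> isvec n x) /\ L vzero /\
  (forall x y, L x -> L y -> L (vadd x y)) /\
  (forall t x, L x -> L (vscal t x)).

Definition proj_subspace (n : nat) (L : vec -> Prop) : Prop :=
  linear_set n L /\ forall x, exists p, is_proj n L x p.

Section LinearSet.
Variables (n : nat) (L : vec -> Prop).
Hypothesis HL : linear_set n L.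

Lemma linear_set_vec x : L x -> isvec n x.
Proof. destruct HL as (H&_); auto. Qed.

Lemma linear_set_vzero : L vzero.
Proof. destruct HL as (_&H&_); auto. Qed.

Lemma linear_set_vadd x y : L x -> L y -> L (vadd x y).
Proof. destruct HL as (_&_&H&_); auto. Qed.

Lemma linear_set_vscal t x : L x -> L (vscal t x).
Proof. destruct HL as (_&_&_&H); auto. Qed.

Lemma linear_set_vsub x y : L x -> L y -> L (vsub x y).
Proof. intros. rewrite vsub_vadd_opp. apply linear_set_vadd, linear_set_vscal; auto. Qed.

End LinearSet.

Lemma perp_linear_set n L : linear_set n (perp n L).
Proof.
  split; [|split; [|split]].
  - intros x [H _]; auto.
  - split; [intros i _; reflexivity|]. intros y _. apply inner_eq0l. auto.
  - intros x y [Hx Hx'] [Hy Hy']. split; [apply isvec_vadd; auto|].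
    intros z Hz. rewrite inner_addl, Hx', Hy'; auto; ring.
  - intros t x [Hx Hx']. split; [apply isvec_vscal; auto|].
    intros z Hz. rewrite inner_scall, Hx'; auto; ring.
Qed.

Lemma inner_lincomb_r n z m c b :
  inner n z (lincomb m c b) = vsum m (fun j => c j * inner n z (b j)).
Proof.
  unfold inner, lincomb.
  rewrite (vsum_ext n _ (fun i => vsum m (fun j => c j * (z i * b j i)))).
  - rewrite vsum_swap. apply vsum_ext. intros. rewrite vsum_scal. auto.
  - intros. rewrite <- vsum_scal. apply vsum_ext; intros; ring.
Qed.

Lemma inner_lincomb_l n z m c b :
  inner n (lincomb m c b) z = vsum m (fun j => c j * inner n (b j) z).
Proof. rewrite inner_sym, inner_lincomb_r. apply vsum_ext; intros; rewrite inner_sym; auto. Qed.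

Lemma isvec_lincomb n m c b :
  (forall j, (j < m)%nat -> isvec n (b j)) -> isvec n (lincomb m c b).
Proof. intros H i Hi. unfold lincomb. apply vsum_eq0. intros j Hj. rewrite H; auto; ring. Qed.

Definition e0 : vec := fun i => if Nat.eqb i 0 then 1 else 0.

Lemma lincomb_e0 m b : (1 <= m)%nat -> lincomb m e0 b = b 0%nat.
Proof.
  intros Hm. apply functional_extensionality; intros i. unfold lincomb.
  rewrite (vsum_ext m _ (fun j => if Nat.eqb j 0 then b 0%nat i else 0)).
  - apply vsum_delta; lia.
  - intros j _. unfold e0. destruct (Nat.eqb_spec j 0); subst; ring.
Qed.

Lemma isvec_e0 n : (1 <= n)%nat -> isvec n e0.
Proof. intros Hn i Hi. unfold e0. destruct (Nat.eqb_spec i 0); [lia|auto]. Qed.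

Lemma norm2_e0 n : (1 <= n)%nat -> norm2 n e0 = 1.
Proof.
  intros Hn. apply norm2_eq1. unfold inner, e0.
  rewrite (vsum_ext n _ (fun i => if Nat.eqb i 0 then 1 else 0)); [apply vsum_delta; lia|].
  intros i _. destruct (Nat.eqb_spec i 0); ring.
Qed.

Lemma Gr_basis n m L : Gr n m L ->
  exists b, (forall j, (j < m)%nat -> isvec n (b j)) /\
    (forall c, (forall i, lincomb m c b i = 0) -> forall j, (j < m)%nat -> c j = 0) /\
    (forall x, L x <-> exists c, x = lincomb m c b).
Proof.
  intros [b [Hb [Hind HL]]]. exists b. split; [|split]; auto.
  intros x. rewrite HL. split; intros [c Hc]; exists c; [|rewrite Hc; auto].
  apply functional_extensionality; auto.
Qed.

Section Span.
Variables (n m : nat) (b : nat -> vec) (L : vec -> Prop).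
Hypothesis Hb : forall j, (j < m)%nat -> isvec n (b j).
Hypothesis Hind : forall c, (forall i, lincomb m c b i = 0) -> forall j, (j < m)%nat -> c j = 0.
Hypothesis HL : forall x, L x <-> exists c, x = lincomb m c b.
Notation ip := (inner n).

Lemma span_perp x : (forall k, (k < m)%nat -> ip x (b k) = 0) -> forall z, L z -> ip x z = 0.
Proof.
  intros Hx z Hz. apply HL in Hz. destruct Hz as [d ->].
  rewrite inner_lincomb_r. apply vsum_eq0. intros k Hk. rewrite Hx; auto; ring.
Qed.

Lemma span_linear_set : linear_set n L.
Proof.
  split; [|split; [|split]].
  - intros x Hx. apply HL in Hx. destruct Hx as [c ->]. apply isvec_lincomb; auto.
  - apply HL. exists (fun _ => 0). apply functional_extensionality; intros i.
    unfold vzero, lincomb. rewrite vsum_eq0; auto. intros; ring.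
  - intros x y Hx Hy. apply HL in Hx, Hy. destruct Hx as [c ->]. destruct Hy as [d ->].
    apply HL. exists (fun j => c j + d j). apply functional_extensionality; intros i.
    unfold vadd, lincomb. rewrite <- vsum_add. apply vsum_ext; intros; ring.
  - intros t x Hx. apply HL in Hx. destruct Hx as [c ->].
    apply HL. exists (fun j => t * c j). apply functional_extensionality; intros i.
    unfold vscal, lincomb. rewrite <- vsum_scal. apply vsum_ext; intros; ring.
Qed.

Lemma gram_injective c :
  (forall k, (k < m)%nat -> vsum m (fun j => ip (b k) (b j) * c j) = 0) ->
  forall j, (j < m)%nat -> c j = 0.
Proof.
  intros Hc. apply Hind. set (w := lincomb m c b).
  assert (Hw : ip w w = 0).
  { unfold w at 2. rewrite inner_lincomb_r. apply vsum_eq0. intros k Hk.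
    rewrite inner_sym. unfold w. rewrite inner_lincomb_r.
    rewrite (vsum_ext m _ (fun j => ip (b k) (b j) * c j)) by (intros; ring).
    rewrite (Hc k Hk). ring. }
  intros i. destruct (Nat.lt_ge_cases i n).
  - apply (inner_self_eq0 n w); auto.
  - apply (isvec_lincomb n m c b); auto.
Qed.

(* the normal equations [sum_j <b_k, b_j> c_j = <b_k, x>] are solvable *)
Lemma span_has_proj x : exists p, is_proj n L x p.
Proof.
  destruct (square_system_surjective m (fun k j => ip (b k) (b j)) gram_injective
              (fun k => ip (b k) x)) as [c Hc].
  exists (lincomb m c b). split; [apply HL; eauto|].
  apply span_perp. intros k Hk.
  rewrite inner_subl, inner_lincomb_l, (inner_sym n x), <- (Hc k Hk).
  rewrite (vsum_ext m (fun j => c j * _) (fun j => ip (b k) (b j) * c j)); [ring|].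
  intros; rewrite inner_sym; ring.
Qed.

Lemma span_unit : (1 <= m)%nat -> exists x, L x /\ ip x x = 1.
Proof.
  intros Hm. apply (unit_in_positive_cone n L (b 0%nat)).
  - intros t y _ Hy. apply (linear_set_vscal n); [apply span_linear_set|auto].
  - apply HL. exists e0. rewrite lincomb_e0; auto.
  - destruct (nonzero_or_zero n (b 0%nat)) as [|z]; auto. exfalso.
    assert (e0 0%nat = 0); [|unfold e0 in H; simpl in H; lra].
    apply Hind; [|lia]. intros i. rewrite lincomb_e0 by auto.
    destruct (Nat.lt_ge_cases i n); [apply z; auto | apply (Hb 0%nat); auto; lia].
Qed.

Lemma span_perp_unit : (m < n)%nat -> exists y, perp n L y /\ ip y y = 1.
Proof.
  intros Hmn.
  destruct (homogeneous_system_nontrivial n (map b (seq 0 m))) as [c [[j [Hj Hcj]] Hc]].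
  { rewrite length_map, length_seq. auto. }
  set (y := fun i => if Nat.ltb i n then c i else 0).
  assert (Hy : perp n L y).
  { split; [intros i Hi; unfold y; destruct (Nat.ltb_spec i n); [lia|auto]|].
    apply span_perp. intros k Hk. rewrite inner_sym. unfold inner, y.
    rewrite (vsum_ext n _ (fun i => b k i * c i)).
    - apply Hc, in_map, in_seq. lia.
    - intros i Hi. destruct (Nat.ltb_spec i n); [auto|lia]. }
  apply (unit_in_positive_cone n (perp n L) y); auto.
  - intros t z _ Hz. apply (linear_set_vscal n); [apply perp_linear_set|auto].
  - exists j. split; auto. unfold y. destruct (Nat.ltb_spec j n); [auto|lia].
Qed.

End Span.

Lemma Gr_proj_subspace n m L : Gr n m L -> proj_subspace n L.
Proof.
  intros HG. destruct (Gr_basis n m L HG) as [b [Hb [Hind HL]]].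
  split; [apply (span_linear_set n m b); auto|]. apply (span_has_proj n m b); auto.
Qed.

Lemma Gr_unit n m L : Gr n m L -> (1 <= m)%nat -> exists x, L x /\ inner n x x = 1.
Proof. intros HG. destruct (Gr_basis n m L HG) as [b [Hb [Hind HL]]]. apply (span_unit n m b); auto. Qed.

Lemma Gr_perp_unit n m L : Gr n m L -> (m < n)%nat -> exists y, perp n L y /\ inner n y y = 1.
Proof.
  intros HG. destruct (Gr_basis n m L HG) as [b [Hb [Hind HL]]]. apply (span_perp_unit n m b); auto.
Qed.

(** * Orthogonal projections *)

Section Projection.
Variables (n : nat) (L : vec -> Prop).
Hypothesis HL : proj_subspace n L.
Notation ip := (inner n).

Let L_vec x : L x -> isvec n x := linear_set_vec n L (proj1 HL) x.

Lemma proj_in x p : is_proj n L x p -> L p.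
Proof. intros [H _]; auto. Qed.

Lemma proj_orth x p y : is_proj n L x p -> L y -> ip (vsub x p) y = 0.
Proof. intros [_ H] Hy; auto. Qed.

Lemma proj_inner x p y : is_proj n L x p -> L y -> ip x y = ip p y.
Proof. intros H Hy. assert (A := proj_orth x p y H Hy). rewrite inner_subl in A. lra. Qed.

Lemma proj_unique x p q : is_proj n L x p -> is_proj n L x q -> p = q.
Proof.
  intros Hp Hq.
  assert (Hd : L (vsub p q)) by (apply (linear_set_vsub n L (proj1 HL)); eauto using proj_in).
  assert (A := proj_inner x p _ Hp Hd). assert (B := proj_inner x q _ Hq Hd).
  assert (ip (vsub p q) (vsub p q) = 0) by (rewrite inner_subl; lra).
  apply (isvec_ext n); eauto using L_vec, proj_in.
  intros i Hi. assert (C := inner_self_eq0 n _ H i Hi). unfold vsub in C. lra.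
Qed.

Lemma proj_pythagoras x p : is_proj n L x p -> ip x x = ip p p + ip (vsub x p) (vsub x p).
Proof. intros Hp. rewrite inner_vsub_self, (proj_inner x p p Hp (proj_in x p Hp)). ring. Qed.

Lemma proj_sqdist x p v : is_proj n L x p -> L v ->
  ip (vsub x v) (vsub x v) = ip (vsub x p) (vsub x p) + ip (vsub p v) (vsub p v).
Proof.
  intros Hp Hv.
  assert (Hpv : L (vsub p v)) by (apply (linear_set_vsub n L (proj1 HL)); eauto using proj_in).
  assert (A := proj_orth x p _ Hp Hpv).
  replace (vsub x v) with (vadd (vsub x p) (vsub p v))
    by (apply functional_extensionality; intros; unfold vadd, vsub; ring).
  rewrite inner_addl, !inner_addr, (inner_sym n (vsub p v) (vsub x p)), A. ring.
Qed.

Lemma proj_self y : L y -> is_proj n L y y.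
Proof. intros Hy. split; auto. intros z Hz. apply inner_eq0l. intros; unfold vsub; ring. Qed.

Lemma proj_vsub x y p q : is_proj n L x p -> is_proj n L y q -> is_proj n L (vsub x y) (vsub p q).
Proof.
  intros Hp Hq. split; [apply (linear_set_vsub n L (proj1 HL)); eauto using proj_in|].
  intros z Hz. replace (vsub (vsub x y) (vsub p q)) with (vsub (vsub x p) (vsub y q))
    by (apply functional_extensionality; intros; unfold vsub; ring).
  rewrite inner_subl, (proj_orth x p z), (proj_orth y q z); auto; ring.
Qed.

Lemma proj_vscal t x p : is_proj n L x p -> is_proj n L (vscal t x) (vscal t p).
Proof.
  intros Hp. split; [apply (linear_set_vscal n L (proj1 HL)); eauto using proj_in|].
  intros z Hz. replace (vsub (vscal t x) (vscal t p)) with (vscal t (vsub x p))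
    by (apply functional_extensionality; intros; unfold vsub, vscal; ring).
  rewrite inner_scall, (proj_orth x p z); auto; ring.
Qed.

Lemma perp_perp_incl x : isvec n x -> (forall y, perp n L y -> ip x y = 0) -> L x.
Proof.
  intros Hx H. destruct (proj2 HL x) as [p Hp].
  assert (Hq : perp n L (vsub x p)).
  { split; [apply isvec_vsub; eauto using L_vec, proj_in|].
    intros y Hy. eapply proj_orth; eauto. }
  assert (A := H _ Hq).
  assert (B : ip p (vsub x p) = 0) by (rewrite inner_sym; apply (proj2 Hq); eauto using proj_in).
  assert (C : ip (vsub x p) (vsub x p) = 0) by (rewrite inner_subl; lra).
  replace x with p; eauto using proj_in.
  apply (isvec_ext n); eauto using L_vec, proj_in.
  intros i Hi. assert (D := inner_self_eq0 n _ C i Hi). unfold vsub in D. lra.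
Qed.

End Projection.

Definition orth_proj n L (H : proj_subspace n L) (x : vec) : vec :=
  proj1_sig (constructive_indefinite_description _ (proj2 H x)).

Definition sqdist n L (H : proj_subspace n L) x :=
  inner n (vsub x (orth_proj n L H x)) (vsub x (orth_proj n L H x)).

Section OrthProj.
Variables (n : nat) (L : vec -> Prop).
Hypothesis H : proj_subspace n L.
Notation ip := (inner n).
Notation P := (orth_proj n L H).

Lemma orth_proj_spec x : is_proj n L x (P x).
Proof. unfold orth_proj. destruct (constructive_indefinite_description _ _). simpl. auto. Qed.

Lemma orth_proj_in x : L (P x).
Proof. apply (proj_in n L x), orth_proj_spec. Qed.

Lemma orth_proj_eq x y : is_proj n L x y -> P x = y.
Proof. intros Hy. apply (proj_unique n L H x); auto. apply orth_proj_spec. Qed.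

Lemma orth_proj_vscal t x : P (vscal t x) = vscal t (P x).
Proof. apply orth_proj_eq, (proj_vscal n L H), orth_proj_spec. Qed.

Lemma orth_proj_vsub x y : P (vsub x y) = vsub (P x) (P y).
Proof. apply orth_proj_eq, (proj_vsub n L H); apply orth_proj_spec. Qed.

Lemma sqdist_pythagoras x : ip x x = ip (P x) (P x) + sqdist n L H x.
Proof. apply (proj_pythagoras n L x (P x) (orth_proj_spec x)). Qed.

Lemma sqdist_ge0 x : 0 <= sqdist n L H x.
Proof. apply inner_self_ge0. Qed.

Lemma sqdist_le x : sqdist n L H x <= ip x x.
Proof. rewrite sqdist_pythagoras. assert (A := inner_self_ge0 n (P x)). lra. Qed.

Lemma sqdist_vscal t x : sqdist n L H (vscal t x) = t * t * sqdist n L H x.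
Proof.
  unfold sqdist. rewrite orth_proj_vscal.
  replace (vsub (vscal t x) (vscal t (P x))) with (vscal t (vsub x (P x)))
    by (apply functional_extensionality; intros; unfold vsub, vscal; ring).
  rewrite inner_scall, inner_scalr. ring.
Qed.

End OrthProj.

(** * Sequences and compactness *)

Lemma inv_succ_small eps : 0 < eps -> exists N, forall k, (N <= k)%nat -> / (INR k + 1) < eps.
Proof.
  intros H. destruct (archimed_cor1 eps H) as [N [HN HN0]]. exists N. intros k Hk.
  apply Rle_lt_trans with (/ INR N); auto.
  apply Rinv_le_contravar; [apply lt_0_INR; auto|]. apply le_INR in Hk. lra.
Qed.

Lemma inv_succ_pos k : 0 < / (INR k + 1).
Proof. apply Rinv_0_lt_compat. assert (A := pos_INR k). lra. Qed.

Definition strict_incr (phi : nat -> nat) := forall k, (phi k < phi (S k))%nat.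

Lemma strict_incr_ge phi : strict_incr phi -> forall k, (k <= phi k)%nat.
Proof. intros H k. induction k; [lia|]. specialize (H k). lia. Qed.

Lemma strict_incr_mono phi : strict_incr phi -> forall a b, (a <= b)%nat -> (phi a <= phi b)%nat.
Proof. intros H a b Hab. induction Hab; [lia|]. specialize (H m). lia. Qed.

Lemma strict_incr_comp phi psi : strict_incr phi -> strict_incr psi -> strict_incr (fun k => phi (psi k)).
Proof.
  intros H1 H2 k. assert (A := strict_incr_mono phi H1 (S (psi k)) (psi (S k)) (H2 k)).
  specialize (H1 (psi k)). lia.
Qed.

Lemma Un_cv_subseq u l phi : strict_incr phi -> Un_cv u l -> Un_cv (fun k => u (phi k)) l.
Proof.
  intros Hp Hu eps He. destruct (Hu eps He) as [N HN]. exists N. intros k Hk.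
  apply HN. assert (A := strict_incr_ge phi Hp k). lia.
Qed.

Lemma Un_cv_const c : Un_cv (fun _ => c) c.
Proof. intros eps He. exists O. intros. unfold Rdist. rewrite Rminus_diag, Rabs_R0. lra. Qed.

Fixpoint diag_subseq (g : nat -> nat -> nat) (k : nat) : nat :=
  match k with O => g O O | S k' => g (S (diag_subseq g k')) (S k') end.

Lemma bolzano_weierstrass_subseq (u : nat -> R) B : (forall k, Rabs (u k) <= B) ->
  exists phi l, strict_incr phi /\ Un_cv (fun k => u (phi k)) l.
Proof.
  intros HB.
  destruct (Bolzano_Weierstrass u (fun c => -B <= c <= B) (compact_P3 (-B) B)) as [l Hl].
  { intros k. specialize (HB k). unfold Rabs in HB. destruct (Rcase_abs (u k)); lra. }
  assert (H : forall N k, exists p, (N <= p)%nat /\ Rabs (u p - l) < / (INR k + 1)).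
  { intros N k. destruct (Hl (fun y => Rabs (y - l) < / (INR k + 1)) N) as [p Hp].
    - exists (mkposreal _ (inv_succ_pos k)). intros y Hy. unfold disc in Hy. simpl in Hy. auto.
    - exists p. auto. }
  set (g := fun N k => proj1_sig (constructive_indefinite_description _ (H N k))).
  assert (Hg : forall N k, (N <= g N k)%nat /\ Rabs (u (g N k) - l) < / (INR k + 1)).
  { intros N k. unfold g. destruct (constructive_indefinite_description _ _). simpl. auto. }
  exists (diag_subseq g), l. split.
  - intros k. simpl. destruct (Hg (S (diag_subseq g k)) (S k)). lia.
  - intros eps He. destruct (inv_succ_small eps He) as [N HN]. exists N. intros k Hk.
    unfold Rdist. apply Rlt_trans with (/ (INR k + 1)); [|apply HN; lia].
    destruct k; simpl; apply Hg.
Qed.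

Definition coord_cv (s : nat -> vec) (l : vec) := forall i, Un_cv (fun k => s k i) (l i).

Lemma coord_cv_subseq s l phi : strict_incr phi -> coord_cv s l -> coord_cv (fun k => s (phi k)) l.
Proof. intros Hp H i. apply (Un_cv_subseq (fun k => s k i)); auto. Qed.

Lemma coord_cv_const x : coord_cv (fun _ => x) x.
Proof. intros i. apply Un_cv_const. Qed.

Lemma coord_cv_vsub s t l m : coord_cv s l -> coord_cv t m ->
  coord_cv (fun k => vsub (s k) (t k)) (vsub l m).
Proof. intros Hs Ht i. unfold vsub. apply CV_minus; auto. Qed.

Lemma coord_cv_inner N sx sy lx ly : coord_cv sx lx -> coord_cv sy ly ->
  Un_cv (fun k => inner N (sx k) (sy k)) (inner N lx ly).
Proof.
  intros Hx Hy. unfold inner. induction N; simpl; [apply Un_cv_const|].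
  apply CV_plus; auto. apply CV_mult; auto.
Qed.

Lemma coord_cv_sqdist N s l : coord_cv s l -> Un_cv (fun k => inner N (vsub (s k) l) (vsub (s k) l)) 0.
Proof.
  intros H. assert (A := coord_cv_vsub _ _ _ _ H (coord_cv_const l)).
  replace 0 with (inner N (vsub l l) (vsub l l)); [apply coord_cv_inner; auto|].
  apply inner_eq0l. intros; unfold vsub; ring.
Qed.

Lemma coord_cv_inner_self_const N s l c :
  coord_cv s l -> (forall k, inner N (s k) (s k) = c) -> inner N l l = c.
Proof.
  intros H Hc. apply (UL_sequence (fun k => inner N (s k) (s k))); [apply coord_cv_inner; auto|].
  eapply Un_cv_ext; [|apply Un_cv_const]. intros; simpl; auto.
Qed.

Lemma coord_sq_le_inner N x i : (i < N)%nat -> x i * x i <= inner N x x.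
Proof.
  intros Hi. unfold inner. induction N; [lia|]. simpl.
  destruct (Nat.eq_dec i N).
  - subst. assert (A := vsum_ge0 N (fun i => x i * x i) (fun i _ => Rle_0_sqr (x i))). lra.
  - assert (A := Rle_0_sqr (x N)). unfold Rsqr in A. specialize (IHN ltac:(lia)). lra.
Qed.

Lemma bounded_coord_cv_subseq N (s : nat -> vec) B :
  (forall k, isvec N (s k)) -> (forall k, inner N (s k) (s k) <= B) ->
  exists phi l, strict_incr phi /\ isvec N l /\ coord_cv (fun k => s (phi k)) l.
Proof.
  intros Hs HB.
  assert (Hc : forall k i, Rabs (s k i) <= B + 1).
  { intros k i. assert (B0 := inner_self_ge0 N (s k)). specialize (HB k).
    destruct (Nat.lt_ge_cases i N) as [Hi|Hi].
    - assert (A := coord_sq_le_inner N (s k) i Hi). unfold Rabs; destruct (Rcase_abs (s k i)); nra.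
    - rewrite Hs, Rabs_R0; auto. lra. }
  assert (Hpre : forall p, exists phi l, strict_incr phi /\
            forall i, (i < p)%nat -> Un_cv (fun k => s (phi k) i) (l i)).
  { induction p.
    - exists (fun k => k), vzero. split; [intros k; lia | intros; lia].
    - destruct IHp as [phi [l [Hphi Hl]]].
      destruct (bolzano_weierstrass_subseq (fun k => s (phi k) p) (B + 1)) as [psi [a [Hpsi Ha]]];
        [intros; apply Hc|].
      exists (fun k => phi (psi k)), (fun i => if Nat.eqb i p then a else l i).
      split; [apply strict_incr_comp; auto|].
      intros i Hi. destruct (Nat.eqb_spec i p); [subst; auto|].
      apply (Un_cv_subseq (fun k => s (phi k) i)); auto. apply Hl. lia. }
  destruct (Hpre N) as [phi [l [Hphi Hl]]].
  exists phi, (fun i => if Nat.ltb i N then l i else 0). split; [auto|split].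
  - intros i Hi. destruct (Nat.ltb_spec i N); [lia|auto].
  - intros i. destruct (Nat.ltb_spec i N); auto.
    eapply Un_cv_ext; [|apply Un_cv_const]. intros k. simpl. rewrite Hs; auto.
Qed.

Lemma max_attained2 N (S : vec -> vec -> Prop) (f : vec -> vec -> R) :
  (exists x v, S x v) ->
  (forall x v, S x v -> isvec N x /\ isvec N v) ->
  (exists B, forall x v, S x v -> inner N x x <= B /\ inner N v v <= B) ->
  (exists M, forall x v, S x v -> f x v <= M) ->
  (forall sx sv lx lv, (forall k, S (sx k) (sv k)) -> isvec N lx -> isvec N lv ->
     coord_cv sx lx -> coord_cv sv lv -> S lx lv /\ Un_cv (fun k => f (sx k) (sv k)) (f lx lv)) ->
  exists x v, S x v /\ forall y w, S y w -> f y w <= f x v.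
Proof.
  intros [x0 [v0 H0]] Hvec [B HB] [M HM] Hcl.
  destruct (completeness (fun r => exists x v, S x v /\ r = f x v)) as [M0 [Hub Hlub]].
  { exists M. intros r [x [v [Hs ->]]]. auto. }
  { exists (f x0 v0), x0, v0. auto. }
  assert (Hk : forall k, exists p, S (fst p) (snd p) /\ M0 - / (INR k + 1) < f (fst p) (snd p)).
  { intros k. apply NNPP. intros C.
    assert (M0 <= M0 - / (INR k + 1)); [|assert (A := inv_succ_pos k); lra].
    apply Hlub. intros r [x [v [Hs ->]]]. apply Rnot_lt_le. intros D. apply C. exists (x, v). auto. }
  destruct (choice _ Hk) as [sq Hsq].
  set (sx := fun k => fst (sq k)). set (sv := fun k => snd (sq k)).
  destruct (bounded_coord_cv_subseq N sx B) as [phi [lx [Hphi [Hlx Hcx]]]];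
    [intros k; apply (Hvec _ _ (proj1 (Hsq k))) | intros k; apply (HB _ _ (proj1 (Hsq k)))|].
  destruct (bounded_coord_cv_subseq N (fun k => sv (phi k)) B) as [psi [lv [Hpsi [Hlv Hcv]]]];
    [intros k; apply (Hvec _ _ (proj1 (Hsq _))) | intros k; apply (HB _ _ (proj1 (Hsq _)))|].
  set (chi := fun k => phi (psi k)).
  assert (Hchi : strict_incr chi) by (apply (strict_incr_comp phi psi); auto).
  destruct (Hcl (fun k => sx (chi k)) (fun k => sv (chi k)) lx lv) as [HS Hf]; auto.
  { intros k; apply Hsq. }
  { apply (coord_cv_subseq (fun k => sx (phi k))); auto. }
  exists lx, lv. split; auto.
  assert (Hge : M0 <= f lx lv).
  { apply Rnot_lt_le. intros C.
    destruct (Hf ((M0 - f lx lv) / 2) ltac:(lra)) as [N1 HN1].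
    destruct (inv_succ_small ((M0 - f lx lv) / 2) ltac:(lra)) as [N2 HN2].
    specialize (HN1 (max N1 N2) ltac:(lia)).
    assert (A := strict_incr_ge chi Hchi (max N1 N2)).
    specialize (HN2 (chi (max N1 N2)) ltac:(lia)).
    destruct (Hsq (chi (max N1 N2))) as [_ Hlt]. unfold Rdist in HN1.
    apply Rabs_def2 in HN1. unfold sx, sv in HN1. lra. }
  intros y w Hyw. apply Rle_trans with M0; [apply Hub; exists y, w; auto | lra].
Qed.

Lemma max_attained N (S : vec -> Prop) (f : vec -> R) :
  (exists x, S x) -> (forall x, S x -> isvec N x) ->
  (exists B, forall x, S x -> inner N x x <= B) ->
  (exists M, forall x, S x -> f x <= M) ->
  (forall s l, (forall k, S (s k)) -> isvec N l -> coord_cv s l ->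
     S l /\ Un_cv (fun k => f (s k)) (f l)) ->
  exists x, S x /\ forall y, S y -> f y <= f x.
Proof.
  intros [x0 H0] Hvec [B HB] [M HM] Hcl.
  destruct (max_attained2 N (fun x v => S x /\ v = vzero) (fun x _ => f x))
    as [x [v [[Hx _] Hmax]]].
  - exists x0, vzero. auto.
  - intros x v [Hx ->]. split; auto. intros i _; reflexivity.
  - exists (Rmax B 0). intros x v [Hx ->]. split; [apply Rle_trans with B; auto; apply Rmax_l|].
    rewrite inner_eq0l; [apply Rmax_r | intros; reflexivity].
  - exists M. intros x v [Hx _]. auto.
  - intros sx sv lx lv Hs Hlx Hlv Hcx Hcv. destruct (Hcl sx lx) as [HS Hf]; auto.
    { intros k; apply Hs. }
    split; auto. split; auto. apply functional_extensionality; intros i.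
    apply (UL_sequence (fun k => sv k i)); auto.
    eapply Un_cv_ext; [|apply Un_cv_const]. intros k. simpl. destruct (Hs k) as [_ ->]. reflexivity.
  - exists x. split; auto. intros y Hy. apply (Hmax y vzero). auto.
Qed.

Section Closed.
Variable n : nat.
Notation ip := (inner n).

Lemma closed_set_coord_cv K s l : Defs.closed_set n K -> (forall k, K (s k)) -> isvec n l ->
  coord_cv s l -> K l.
Proof.
  intros HK Hs Hl Hc. apply HK; auto. intros eps He.
  destruct (coord_cv_sqdist n s l Hc (eps * eps) ltac:(nra)) as [k Hk].
  specialize (Hk k (le_n _)). unfold Rdist in Hk. rewrite Rminus_0_r in Hk.
  exists (s k). split; auto.
  assert (E : ip (vsub l (s k)) (vsub l (s k)) = ip (vsub (s k) l) (vsub (s k) l))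
    by (rewrite !inner_vsub_self, (inner_sym n l (s k)); ring).
  rewrite Rabs_pos_eq in Hk by apply inner_self_ge0.
  unfold norm2. rewrite E, <- (sqrt_square eps) by lra. apply sqrt_lt_1_alt.
  split; [apply inner_self_ge0 | lra].
Qed.

Lemma dual_cone_coord_cv K s l : (forall k, dual_cone n K (s k)) -> isvec n l ->
  coord_cv s l -> dual_cone n K l.
Proof.
  intros Hs Hl Hc. split; auto. intros x Hx. apply Rle_ge.
  apply (@Rle_cv_lim (fun _ => 0) (fun k => ip (s k) x)); [|apply Un_cv_const|].
  - intros k. apply Rge_le, (proj2 (Hs k)); auto.
  - apply coord_cv_inner; auto. apply coord_cv_const.
Qed.

Lemma perp_coord_cv L s l : (forall k, perp n L (s k)) -> isvec n l -> coord_cv s l -> perp n L l.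
Proof.
  intros Hs Hl Hc. split; auto. intros y Hy.
  apply (UL_sequence (fun k => ip (s k) y)); [apply coord_cv_inner; auto; apply coord_cv_const|].
  eapply Un_cv_ext; [|apply Un_cv_const]. intros k. simpl. symmetry. apply (proj2 (Hs k)); auto.
Qed.

Lemma proj_subspace_coord_cv L s l : proj_subspace n L -> (forall k, L (s k)) -> isvec n l ->
  coord_cv s l -> L l.
Proof.
  intros HL Hs Hl Hc. apply (perp_perp_incl n L HL); auto. intros y Hy.
  apply (UL_sequence (fun k => ip (s k) y)); [apply coord_cv_inner; auto; apply coord_cv_const|].
  eapply Un_cv_ext; [|apply Un_cv_const]. intros k. simpl. rewrite inner_sym.
  symmetry. apply (proj2 Hy); auto.
Qed.

End Closed.

(** * Angles between cones *)

Lemma acos_antitone q c : -1 <= q -> q <= c -> c <= 1 -> acos c <= acos q.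
Proof.
  intros H1 H2 H3. apply Rnot_lt_le. intros C.
  destruct (acos_bound q). destruct (acos_bound c).
  assert (D := cos_decreasing_1 _ _ H H0 H4 H5 C).
  rewrite !cos_acos in D by lra. lra.
Qed.

Lemma sin_acos_nonneg c : 0 <= c <= 1 -> sin (acos c) = sqrt (1 - c * c).
Proof. intros H. rewrite sin_acos by lra. unfold Rsqr. auto. Qed.

Definition closed_cone (n : nat) (C : vec -> Prop) : Prop :=
  (forall x, C x -> isvec n x) /\
  (forall t x, 0 < t -> C x -> C (vscal t x)) /\
  (forall s l, (forall k, C (s k)) -> isvec n l -> coord_cv s l -> C l).

Section Angle.
Variable n : nat.
Notation ip := (inner n).
Notation nrm := (norm2 n).
Variables A C : vec -> Prop.

Lemma angle_set_min x0 v0 :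
  A x0 -> C v0 -> ip x0 x0 = 1 -> ip v0 v0 = 1 ->
  (forall x v, A x -> C v -> ip x v <= ip x0 v0 * nrm x * nrm v) ->
  is_min (angle_set n A C) (acos (ip x0 v0)).
Proof.
  intros Ax Cv Ux Uv Hmax.
  assert (nx : nrm x0 = 1) by (apply norm2_eq1; auto).
  assert (nv : nrm v0 = 1) by (apply norm2_eq1; auto).
  split.
  - exists x0, v0. repeat split; auto.
    + apply norm2_gt0_nonzero. rewrite nx; lra.
    + apply norm2_gt0_nonzero. rewrite nv; lra.
    + unfold angle. rewrite nx, nv. f_equal. field.
  - intros r [x [v [Hx [nzx [Hv [nzv ->]]]]]]. unfold angle.
    assert (px := nonzero_norm2_gt0 n x nzx). assert (pv := nonzero_norm2_gt0 n v nzv).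
    assert (D := Hmax x v Hx Hv). assert (D2 := cauchy_schwarz_lower n x v).
    assert (D3 := cauchy_schwarz n x0 v0). rewrite nx, nv in D3.
    assert (E : forall a, a / (nrm x * nrm v) * (nrm x * nrm v) = a) by (intros; field; lra).
    apply acos_antitone; [| |lra]; apply (Rmult_le_reg_r (nrm x * nrm v)); try nra;
      rewrite E; lra.
Qed.

Hypothesis HA : closed_cone n A.
Hypothesis HC : closed_cone n C.

Lemma unit_bound_homogeneous c :
  (forall x v, A x -> C v -> ip x x = 1 -> ip v v = 1 -> ip x v <= c) ->
  forall x v, A x -> C v -> ip x v <= c * nrm x * nrm v.
Proof.
  intros Hc x v Hx Hv.
  assert (D := cauchy_schwarz n x v).
  destruct (norm2_ge0 n x) as [px|px]; [|rewrite <- px in *; nra].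
  destruct (norm2_ge0 n v) as [pv|pv]; [|rewrite <- pv in *; nra].
  set (x' := vscal (/ nrm x) x). set (v' := vscal (/ nrm v) v).
  assert (D' : ip x' v' <= c).
  { apply Hc.
    - apply (proj1 (proj2 HA)); auto. apply Rinv_0_lt_compat; auto.
    - apply (proj1 (proj2 HC)); auto. apply Rinv_0_lt_compat; auto.
    - apply norm2_eq1, norm2_normalize, norm2_gt0_nonzero; auto.
    - apply norm2_eq1, norm2_normalize, norm2_gt0_nonzero; auto. }
  unfold x', v' in D'. rewrite inner_scall, inner_scalr in D'.
  replace (ip x v) with ((nrm x * nrm v) * (/ nrm x * (/ nrm v * ip x v))) by (field; lra).
  replace (c * nrm x * nrm v) with ((nrm x * nrm v) * c) by ring.
  apply Rmult_le_compat_l; [nra|lra].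
Qed.

Hypothesis HAne : exists x, A x /\ ip x x = 1.
Hypothesis HCne : exists x, C x /\ ip x x = 1.

Lemma max_cosine_attained : exists x0 v0, A x0 /\ C v0 /\ ip x0 x0 = 1 /\ ip v0 v0 = 1 /\
  forall x v, A x -> C v -> ip x v <= ip x0 v0 * nrm x * nrm v.
Proof.
  set (S := fun x v => A x /\ C v /\ ip x x = 1 /\ ip v v = 1).
  destruct (max_attained2 n S (fun x v => ip x v)) as [x0 [v0 [[Ax [Cv [Ux Uv]]] Hmax]]].
  - destruct HAne as [x [? ?]]. destruct HCne as [v [? ?]]. exists x, v. repeat split; auto.
  - intros x v [? [? _]]. split; [apply (proj1 HA) | apply (proj1 HC)]; auto.
  - exists 1. intros x v [_ [_ [-> ->]]]. lra.
  - exists 1. intros x v [_ [_ [Hx Hv]]]. assert (D := cauchy_schwarz n x v).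
    rewrite (proj2 (norm2_eq1 n x)), (proj2 (norm2_eq1 n v)) in D; auto. lra.
  - intros sx sv lx lv Hs Hlx Hlv Hcx Hcv. split; [|apply coord_cv_inner; auto].
    repeat split.
    + apply (proj2 (proj2 HA) sx); auto. intros k; apply Hs.
    + apply (proj2 (proj2 HC) sv); auto. intros k; apply Hs.
    + apply (coord_cv_inner_self_const n sx); auto. intros k; apply Hs.
    + apply (coord_cv_inner_self_const n sv); auto. intros k; apply Hs.
  - exists x0, v0. repeat split; auto.
    apply unit_bound_homogeneous. intros x v Hx Hv Ux' Uv'. apply Hmax. repeat split; auto.
Qed.

Hypothesis HAn : forall x, A x -> A (vscal (-1) x).

Lemma max_cosine_range x0 v0 : A x0 -> C v0 -> ip x0 x0 = 1 -> ip v0 v0 = 1 ->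
  (forall x v, A x -> C v -> ip x v <= ip x0 v0 * nrm x * nrm v) ->
  0 <= ip x0 v0 <= 1.
Proof.
  intros Ax Cv Ux Uv Hmax.
  assert (nx : nrm x0 = 1) by (apply norm2_eq1; auto).
  assert (nv : nrm v0 = 1) by (apply norm2_eq1; auto).
  assert (D := cauchy_schwarz n x0 v0).
  assert (D' := Hmax _ _ (HAn x0 Ax) Cv).
  rewrite inner_scall, norm2_scal, Rabs_left, nx, nv in D' by lra. rewrite nx, nv in D. lra.
Qed.

End Angle.

(** * Cones and dual norms *)

Section Cone.
Variables (n : nat) (K : vec -> Prop).
Hypothesis HK : regular_cone n K.
Notation ip := (inner n).

Lemma regular_cone_vec x : K x -> isvec n x.
Proof. destruct HK as (H&_); auto. Qed.

Lemma regular_cone_vscal t x : 0 <= t -> K x -> K (vscal t x).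
Proof. destruct HK as (_&_&H&_). intros. apply H; auto. lra. Qed.

Lemma regular_cone_vadd x y : K x -> K y -> K (vadd x y).
Proof. destruct HK as (_&_&_&H&_). apply H. Qed.

Lemma regular_cone_closed s l : (forall k, K (s k)) -> isvec n l -> coord_cv s l -> K l.
Proof. destruct HK as (_&_&_&_&H&_). intros. apply (closed_set_coord_cv n K s); auto. Qed.

Hypothesis Hn : (1 <= n)%nat.

Lemma regular_cone_nonzero : exists y, K y /\ Defs.nonzero n y.
Proof.
  destruct HK as (_&_&_&_&_&_&[x [Hx [eps [He HKx]]]]).
  destruct (nonzero_or_zero n x) as [nz|z].
  - exists x. split; auto. apply HKx; auto. unfold norm2. rewrite inner_eq0l, sqrt_0; [lra|].
    intros; unfold vsub; ring.
  - exists (vscal (eps / 2) e0).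
    assert (He0 := isvec_e0 n Hn).
    split; [apply HKx; [apply isvec_vscal; auto|]|].
    + replace (vsub (vscal (eps / 2) e0) x) with (vscal (eps / 2) e0).
      * rewrite norm2_scal, Rabs_pos_eq, norm2_e0 by (auto; lra). lra.
      * apply (isvec_ext n); [apply isvec_vscal; auto| |].
        -- apply isvec_vsub; [apply isvec_vscal|]; auto.
        -- intros i Hi. unfold vsub. rewrite (z i Hi). ring.
    + exists 0%nat. split; [lia|]. unfold vscal, e0. simpl. lra.
Qed.

(* A nearest point [p] of the cone to [z] makes [p - z] a supporting normal of the cone:
   moving from [p] towards [k] by a small [t] would otherwise get closer to [z]. *)
Lemma nearest_point_dual z p : isvec n z -> K p ->
  (forall k, K k -> ip (vsub p z) (vsub p z) <= ip (vsub k z) (vsub k z)) ->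
  dual_cone n K (vsub p z).
Proof.
  intros Hz Kp Hmin. set (u := vsub p z).
  split; [apply isvec_vsub; [apply regular_cone_vec|]; auto|].
  intros k Kk. apply Rle_ge, Rnot_lt_le. intros Ha.
  set (a := ip u k) in *. set (q := ip k k). assert (q0 : 0 <= q) by apply inner_self_ge0.
  set (t := - a / (q + 1)).
  assert (tp : 0 < t) by (apply Rdiv_lt_0_compat; lra).
  assert (D := Hmin (vadd p (vscal t k))
                 (regular_cone_vadd _ _ Kp (regular_cone_vscal t k ltac:(lra) Kk))).
  replace (vsub (vadd p (vscal t k)) z) with (vadd u (vscal t k)) in D
    by (apply functional_extensionality; intros; unfold u, vadd, vsub, vscal; ring).
  rewrite inner_addl, !inner_addr, !inner_scall, !inner_scalr, (inner_sym n k u) in D.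
  fold a q in D.
  assert (E : t * q < - a).
  { apply Rmult_lt_reg_r with (q + 1); [lra|].
    unfold t. replace (- a / (q + 1) * q * (q + 1)) with (- a * q) by (field; lra). nra. }
  fold u in D. nra.
Qed.

Lemma nearest_point_exists z : isvec n z ->
  exists p, K p /\ forall k, K k -> ip (vsub p z) (vsub p z) <= ip (vsub k z) (vsub k z).
Proof.
  intros Hz. assert (K0 : K vzero) by (destruct HK as (_&H&_); auto).
  assert (E0 : ip (vsub vzero z) (vsub vzero z) = ip z z)
    by (rewrite inner_vsub_self, !(inner_eq0l n vzero) by reflexivity; ring).
  (* minimise over the compact part of the cone within distance |z| of z *)
  destruct (max_attained n (fun x => K x /\ ip (vsub x z) (vsub x z) <= ip z z)
              (fun x => - ip (vsub x z) (vsub x z))) as [p [[Kp Hpb] Hmin]].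
  - exists vzero. split; auto. lra.
  - intros x [Kx _]. apply regular_cone_vec; auto.
  - exists (4 * ip z z). intros x [Kx Hb].
    assert (A := inner_self_ge0 n (vsub x (vscal 2 z))).
    rewrite inner_vsub_self, inner_scalr, inner_scall, inner_scalr in A.
    rewrite inner_vsub_self in Hb. lra.
  - exists 0. intros x _. assert (D := inner_self_ge0 n (vsub x z)). lra.
  - intros s l Hs Hl Hc.
    assert (Hcz := coord_cv_vsub _ _ _ _ Hc (coord_cv_const z)).
    split; [split|].
    + apply (regular_cone_closed s); auto. intros k; apply Hs.
    + apply (@Rle_cv_lim (fun k => ip (vsub (s k) z) (vsub (s k) z)) (fun _ => ip z z));
        [intros k; apply Hs | apply coord_cv_inner; auto | apply Un_cv_const].
    + apply (CV_opp (fun k => ip (vsub (s k) z) (vsub (s k) z))). apply coord_cv_inner; auto.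
  - exists p. split; auto. intros k Kk.
    destruct (Rle_dec (ip (vsub k z) (vsub k z)) (ip z z)); [|lra].
    assert (D := Hmin k ltac:(split; auto)). lra.
Qed.

Lemma dual_cone_vscal t x : 0 < t -> dual_cone n K x -> dual_cone n K (vscal t x).
Proof.
  intros Ht [Hx Hx']. split; [apply isvec_vscal; auto|].
  intros y Hy. rewrite inner_scall. specialize (Hx' y Hy). nra.
Qed.

(* The nearest point of the cone to [-k0], for a nonzero [k0] of the (pointed) cone, is a
   nonzero element of the dual cone. *)
Lemma dual_cone_unit : exists u, dual_cone n K u /\ ip u u = 1.
Proof.
  destruct regular_cone_nonzero as [k0 [Kk0 nz0]].
  set (z := vscal (-1) k0).
  assert (Hz : ~ K z).
  { intros Kz. destruct nz0 as [i [Hi Hk]]. apply Hk.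
    destruct HK as (_&_&_&_&_&Hp&_). apply (Hp k0); auto.
    replace (fun i => - k0 i) with z; auto.
    apply functional_extensionality; intros; unfold z, vscal; ring. }
  assert (zv : isvec n z) by (apply isvec_vscal, regular_cone_vec; auto).
  destruct (nearest_point_exists z zv) as [p [Kp Hmin]].
  apply (unit_in_positive_cone n (dual_cone n K) (vsub p z)).
  - intros t x Ht Hx. apply dual_cone_vscal; auto.
  - apply nearest_point_dual; auto.
  - destruct (nonzero_or_zero n (vsub p z)) as [|zz]; auto. exfalso. apply Hz.
    replace z with p; auto. apply (isvec_ext n); auto; [apply regular_cone_vec; auto|].
    intros i Hi. specialize (zz i Hi). unfold vsub in zz. lra.
Qed.

End Cone.

Lemma dualnorm_is_norm2 n u : (1 <= n)%nat -> isvec n u -> dualnorm_is n u (norm2 n u).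
Proof.
  intros Hn Hu. split.
  - destruct (nonzero_or_zero n u) as [nz|z].
    + exists (vscal (/ norm2 n u) u). split; [apply isvec_vscal; auto|].
      split; [apply norm2_normalize; auto|].
      assert (p := nonzero_norm2_gt0 n u nz). rewrite inner_scalr, <- norm2_sq. field. lra.
    + (* junk case u = 0: any unit vector, e.g. e0, attains the maximum 0 *)
      exists e0. split; [apply isvec_e0; auto|]. split; [apply norm2_e0; auto|].
      rewrite inner_eq0l by auto. apply norm2_of_sq; [lra|]. rewrite inner_eq0l; auto; ring.
  - intros s [x [_ [Hx ->]]]. assert (D := cauchy_schwarz n u x). rewrite Hx in D. lra.
Qed.

Lemma is_max_unique S a b : is_max S a -> is_max S b -> a = b.
Proof. intros [Ha Ha'] [Hb Hb']. apply Ha' in Hb. apply Hb' in Ha. lra. Qed.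

Section Residual.
Variable n : nat.
Notation ip := (inner n).
Notation nrm := (norm2 n).

Lemma residual_sq_lower w e c : ip e e = 1 -> ip w e <= c * nrm w ->
  1 - c * c <= ip (vsub w e) (vsub w e).
Proof.
  intros Ue Hc. rewrite inner_vsub_self, Ue, <- norm2_sq.
  assert (0 <= (nrm w - c) * (nrm w - c)) by apply Rle_0_sqr. nra.
Qed.

Lemma residual_sq_unit a b : ip a a = 1 -> ip b b = 1 ->
  ip (vsub (vscal (ip a b) b) a) (vsub (vscal (ip a b) b) a) = 1 - ip a b * ip a b.
Proof.
  intros Ua Ub. rewrite inner_vsub_self, !inner_scall, !inner_scalr, Ua, Ub, (inner_sym n b a).
  ring.
Qed.

End Residual.

Lemma proj_subspace_closed_cone n L : proj_subspace n L -> closed_cone n L.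
Proof.
  intros HL. split; [|split].
  - exact (linear_set_vec n L (proj1 HL)).
  - intros t x _ Hx. apply (linear_set_vscal n); [apply HL|auto].
  - intros s l. apply (proj_subspace_coord_cv n); auto.
Qed.

Lemma perp_closed_cone n L : closed_cone n (perp n L).
Proof.
  split; [|split].
  - intros x [Hx _]; auto.
  - intros t x _ Hx. apply (linear_set_vscal n); [apply perp_linear_set|auto].
  - apply perp_coord_cv.
Qed.

Lemma regular_cone_closed_cone n K : regular_cone n K -> closed_cone n K.
Proof.
  intros HK. split; [|split].
  - apply (regular_cone_vec n K HK).
  - intros t x Ht Hx. apply (regular_cone_vscal n K HK); auto; lra.
  - apply (regular_cone_closed n K HK).
Qed.

Lemma dual_cone_closed_cone n K : closed_cone n (dual_cone n K).
Proof.
  split; [|split].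
  - intros x [Hx _]; auto.
  - apply dual_cone_vscal.
  - apply dual_cone_coord_cv.
Qed.

Lemma nubar_eq_sin_angle n m K L : (1 <= m)%nat -> (m < n)%nat -> regular_cone n K -> Gr n m L ->
  exists a, is_min (angle_set n L K) a /\ is_min (nubar_set n K L) (sin a).
Proof.
  intros Hm Hmn HK HG. assert (HL := Gr_proj_subspace n m L HG).
  assert (HKne : exists x, K x /\ inner n x x = 1).
  { destruct (regular_cone_nonzero n K HK ltac:(lia)) as [y [Ky nz]].
    apply (unit_in_positive_cone n K y); auto.
    intros; apply (regular_cone_vscal n K HK); auto; lra. }
  destruct (max_cosine_attained n L K (proj_subspace_closed_cone n L HL)
              (regular_cone_closed_cone n K HK) (Gr_unit n m L HG Hm) HKne)
    as [x0 [v0 [Lx [Kv [Ux [Uv Hmax]]]]]].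
  set (c := inner n x0 v0) in *.
  assert (Hc : 0 <= c <= 1).
  { apply (max_cosine_range n L K) with (x0 := x0) (v0 := v0); auto.
    intros; apply (linear_set_vscal n); [apply HL|auto]. }
  exists (acos c). split; [apply angle_set_min; auto|].
  rewrite sin_acos_nonneg by auto. split.
  - exists (vscal c v0), x0. split; [apply (regular_cone_vscal n K HK); auto; lra|].
    split; auto. split; [apply norm2_eq1; auto|].
    unfold norm2. f_equal. symmetry. apply residual_sq_unit; auto.
  - intros r [w [y [Kw [Ly [Uy ->]]]]]. unfold norm2. apply sqrt_le_1_alt.
    apply residual_sq_lower; [apply norm2_eq1; auto|].
    rewrite inner_sym. assert (D := Hmax y w Ly Kw). rewrite Uy in D. lra.
Qed.

Lemma nu_eq_sin_angle n m K L : (m < n)%nat -> regular_cone n K -> Gr n m L ->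
  exists a, is_min (angle_set n (perp n L) (dual_cone n K)) a /\ is_min (nu_set n K L) (sin a).
Proof.
  intros Hmn HK HG. assert (Hn : (1 <= n)%nat) by lia.
  destruct (max_cosine_attained n (perp n L) (dual_cone n K) (perp_closed_cone n L)
              (dual_cone_closed_cone n K) (Gr_perp_unit n m L HG Hmn) (dual_cone_unit n K HK Hn))
    as [x0 [v0 [Px [Dv [Ux [Uv Hmax]]]]]].
  set (c := inner n x0 v0) in *.
  assert (Hc : 0 <= c <= 1).
  { apply (max_cosine_range n (perp n L) (dual_cone n K)) with (x0 := x0) (v0 := v0); auto.
    intros; apply (linear_set_vscal n); [apply perp_linear_set|auto]. }
  assert (Hxv : isvec n x0) by apply (proj1 Px).
  assert (Hvv : isvec n v0) by apply (proj1 Dv).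
  exists (acos c). split; [apply angle_set_min; auto|].
  rewrite sin_acos_nonneg by auto. split.
  - exists v0, (vscal c x0). split; auto.
    split; [apply (linear_set_vscal n); [apply perp_linear_set|auto]|]. split.
    + replace 1 with (norm2 n v0) by (apply norm2_eq1; auto). apply dualnorm_is_norm2; auto.
    + replace (sqrt (1 - c * c)) with (norm2 n (vsub (vscal c x0) v0)).
      * apply dualnorm_is_norm2; auto. apply isvec_vsub; auto. apply isvec_vscal; auto.
      * unfold norm2, c. f_equal. rewrite (inner_sym n x0 v0). apply residual_sq_unit; auto.
  - intros r [u [y [Du [Py [Hu Hr]]]]].
    assert (uv : isvec n u) by apply (proj1 Du).
    assert (yv : isvec n y) by apply (proj1 Py).
    rewrite (is_max_unique _ _ _ Hr (dualnorm_is_norm2 n _ Hn (isvec_vsub n _ _ yv uv))).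
    assert (Nu := is_max_unique _ _ _ Hu (dualnorm_is_norm2 n u Hn uv)).
    unfold norm2. apply sqrt_le_1_alt.
    apply residual_sq_lower; [apply norm2_eq1; auto|].
    assert (D := Hmax y u Py Du). rewrite <- Nu in D. lra.
Qed.

(** * Distances between subspaces *)

Lemma Gr_proj_onto n m L1 L2 : Gr n m L1 -> Gr n m L2 ->
  (forall x, L1 x -> (forall z, L2 z -> inner n x z = 0) -> x = vzero) ->
  forall y, L2 y -> exists x, L1 x /\ is_proj n L2 x y.
Proof.
  intros G1 G2 Hinj y Hy.
  destruct (Gr_basis n m L1 G1) as [b1 [Hb1 [Hind1 HL1]]].
  destruct (Gr_basis n m L2 G2) as [b2 [Hb2 [Hind2 HL2]]].
  destruct (square_system_surjective m (fun k j => inner n (b1 j) (b2 k)))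
    with (y := fun k => inner n y (b2 k)) as [c Hc].
  - intros c Hc. apply Hind1. intros i.
    assert (E : lincomb m c b1 = vzero); [|rewrite E; reflexivity].
    apply Hinj; [apply HL1; eauto|].
    apply (span_perp n m b2); auto. intros k Hk. rewrite inner_lincomb_l, <- (Hc k Hk).
    apply vsum_ext; intros; ring.
  - exists (lincomb m c b1). split; [apply HL1; eauto|]. split; auto.
    apply (span_perp n m b2); auto. intros k Hk. rewrite inner_subl, inner_lincomb_l.
    rewrite (vsum_ext m _ (fun j => inner n (b1 j) (b2 k) * c j)) by (intros; ring).
    rewrite (Hc k Hk). ring.
Qed.

Lemma orth_proj_coord_cv n L H s l : coord_cv s l ->
  coord_cv (fun k => orth_proj n L H (s k)) (orth_proj n L H l).
Proof.
  intros Hc i. set (P := orth_proj n L H).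
  destruct (Nat.lt_ge_cases i n) as [Hi|Hi].
  - intros eps He. destruct (coord_cv_sqdist n s l Hc (eps * eps) ltac:(nra)) as [N HN].
    exists N. intros k Hk. specialize (HN k Hk). unfold Rdist in *. rewrite Rminus_0_r in HN.
    set (w := vsub (s k) l) in *.
    replace (P (s k) i - P l i) with (P w i) by (unfold P, w; rewrite orth_proj_vsub; auto).
    assert (D1 := coord_sq_le_inner n (P w) i Hi).
    assert (D2 := sqdist_le n L H w).
    assert (D3 := sqdist_pythagoras n L H w). assert (D4 := sqdist_ge0 n L H w).
    rewrite Rabs_pos_eq in HN by apply inner_self_ge0.
    apply Rle_lt_trans with (sqrt (inner n w w)).
    + rewrite <- sqrt_Rsqr_abs. apply sqrt_le_1_alt. unfold Rsqr. fold P in D3. lra.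
    + rewrite <- (sqrt_square eps) by lra. apply sqrt_lt_1_alt. split; [apply inner_self_ge0|lra].
  - eapply Un_cv_ext; [|apply Un_cv_const]. intros k. simpl.
    rewrite !(linear_set_vec n L (proj1 H)); auto; apply orth_proj_in.
Qed.

Lemma sqdist_max_unit n L1 L2 (H1 : proj_subspace n L1) (H2 : proj_subspace n L2) :
  (exists x, L1 x /\ inner n x x = 1) ->
  exists x0, L1 x0 /\ inner n x0 x0 = 1 /\
    forall x, L1 x -> sqdist n L2 H2 x <= sqdist n L2 H2 x0 * inner n x x.
Proof.
  intros Hne.
  destruct (max_attained n (fun x => L1 x /\ inner n x x = 1) (sqdist n L2 H2))
    as [x0 [[L0 U0] Hmax]]; auto.
  - intros x [Lx _]. apply (linear_set_vec n L1 (proj1 H1)); auto.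
  - exists 1. intros x [_ ->]. lra.
  - exists 1. intros x [_ Ux]. rewrite <- Ux. apply sqdist_le.
  - intros s l Hs Hl Hc. split; [split|].
    + apply (proj_subspace_coord_cv n L1 s); auto. intros k; apply Hs.
    + apply (coord_cv_inner_self_const n s); auto. intros k; apply Hs.
    + apply coord_cv_inner; apply coord_cv_vsub; auto; apply orth_proj_coord_cv; auto.
  - exists x0. split; auto. split; auto. intros x Lx.
    destruct (inner_self_ge0 n x) as [Xp|X0].
    + set (t := / norm2 n x).
      assert (np : 0 < norm2 n x)
        by (apply nonzero_norm2_gt0, norm2_gt0_nonzero; unfold norm2; apply sqrt_lt_R0; auto).
      assert (E : t * t * inner n x x = 1) by (unfold t; rewrite <- norm2_sq; field; lra).
      assert (D := Hmax (vscal t x)).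
      rewrite sqdist_vscal, inner_scall, inner_scalr in D.
      specialize (D ltac:(split; [apply (linear_set_vscal n L1 (proj1 H1)); auto | lra])).
      assert (D0 := sqdist_ge0 n L2 H2 x).
      replace (sqdist n L2 H2 x) with ((t * t * sqdist n L2 H2 x) * inner n x x)
        by (replace (t * t * sqdist n L2 H2 x * inner n x x)
              with (sqdist n L2 H2 x * (t * t * inner n x x)) by ring; rewrite E; ring).
      apply Rmult_le_compat_r; lra.
    + assert (D := sqdist_le n L2 H2 x). assert (D0 := sqdist_ge0 n L2 H2 x).
      assert (D1 := sqdist_ge0 n L2 H2 x0). rewrite <- X0 in *. lra.
Qed.

(* If [L1] is uniformly close to [L2] (relative squared distance [a < 1]), every unit vector
   [y] of [L2] is the projection of some [x] in [L1] with [|x|^2 <= 1/(1-a)]; since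
   [<P1 y, x> = <y, x> = 1], Cauchy-Schwarz gives [|P1 y|^2 >= 1 - a]. *)
Lemma sqdist_bound_transpose n m L1 L2 (H1 : proj_subspace n L1) (H2 : proj_subspace n L2) a :
  Gr n m L1 -> Gr n m L2 -> a < 1 ->
  (forall x, L1 x -> sqdist n L2 H2 x <= a * inner n x x) ->
  forall y, L2 y -> inner n y y = 1 -> sqdist n L1 H1 y <= a.
Proof.
  intros G1 G2 Ha Hb y Ly Uy.
  destruct (Gr_proj_onto n m L1 L2 G1 G2) with (y := y) as [x [Lx Hx]]; auto.
  - intros x Lx Hx. apply (isvec_inner_self_eq0 n); [apply (linear_set_vec n L1 (proj1 H1)); auto|].
    assert (E : orth_proj n L2 H2 x = vzero).
    { apply orth_proj_eq. split; [apply (linear_set_vzero n L2 (proj1 H2))|].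
      intros z Hz. rewrite inner_subl, Hx, (inner_eq0l n vzero z) by (auto; reflexivity). ring. }
    assert (D := sqdist_pythagoras n L2 H2 x). specialize (Hb x Lx).
    rewrite E, (inner_eq0l n vzero vzero) in D by reflexivity.
    assert (A := inner_self_ge0 n x). nra.
  - assert (E : orth_proj n L2 H2 x = y) by (apply orth_proj_eq; auto).
    assert (Hxy : inner n y x = 1).
    { rewrite inner_sym, (proj_inner n L2 x y y Hx Ly). auto. }
    assert (HX : (1 - a) * inner n x x <= 1).
    { assert (D := sqdist_pythagoras n L2 H2 x). rewrite E, Uy in D. specialize (Hb x Lx). lra. }
    assert (Hxy' : inner n (orth_proj n L1 H1 y) x = 1).
    { rewrite <- (proj_inner n L1 y _ x (orth_proj_spec n L1 H1 y) Lx). auto. }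
    assert (CS := cauchy_schwarz_sq n (orth_proj n L1 H1 y) x). rewrite Hxy' in CS.
    assert (D := sqdist_pythagoras n L1 H1 y). rewrite Uy in D.
    assert (X0 := inner_self_ge0 n x). assert (Q0 := inner_self_ge0 n (orth_proj n L1 H1 y)).
    set (Q := inner n (orth_proj n L1 H1 y) (orth_proj n L1 H1 y)) in *.
    set (X := inner n x x) in *.
    assert (Xp : 0 < X) by (destruct X0 as [|X0]; auto; rewrite <- X0 in CS; nra).
    assert (Q >= 1 - a) by (apply Rle_ge, Rmult_le_reg_r with X; auto; nra).
    lra.
Qed.

Section TwoSubspaces.
Variables (n : nat) (L1 L2 : vec -> Prop).
Hypotheses (H1 : proj_subspace n L1) (H2 : proj_subspace n L2).
Notation ip := (inner n).
Notation P1 := (orth_proj n L1 H1).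
Notation P2 := (orth_proj n L2 H2).

Lemma orth_proj_of_perp_sq b w : 0 <= b ->
  (forall y, L2 y -> sqdist n L1 H1 y <= b * ip y y) ->
  (forall s, L1 s -> ip w s = 0) -> ip (P2 w) (P2 w) <= b * ip w w.
Proof.
  intros b0 Hb Hw. set (r := P2 w).
  assert (Lr : L2 r) by apply orth_proj_in.
  assert (E : ip r r = ip w (vsub r (P1 r))).
  { rewrite inner_subr, (Hw _ (orth_proj_in n L1 H1 r)).
    rewrite (proj_inner n L2 w r r (orth_proj_spec n L2 H2 w) Lr). ring. }
  assert (CS := cauchy_schwarz_sq n w (vsub r (P1 r))). rewrite <- E in CS.
  fold (sqdist n L1 H1 r) in CS. assert (Db := Hb r Lr).
  assert (W0 := inner_self_ge0 n w). assert (R0 := inner_self_ge0 n r).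
  destruct R0 as [R0|R0]; [|rewrite <- R0; nra].
  apply Rmult_le_reg_r with (ip r r); auto. nra.
Qed.

(* Split [P2 z] as [P2 (P1 z) + P2 (z - P1 z)]; the two resulting error terms are orthogonal. *)
Lemma orth_proj_diff_sq a b z : 0 <= b ->
  (forall x, L1 x -> sqdist n L2 H2 x <= a * ip x x) ->
  (forall y, L2 y -> sqdist n L1 H1 y <= b * ip y y) ->
  ip (vsub (P1 z) (P2 z)) (vsub (P1 z) (P2 z)) <=
    a * ip (P1 z) (P1 z) + b * ip (vsub z (P1 z)) (vsub z (P1 z)).
Proof.
  intros b0 Ha Hb. set (p := P1 z). set (w := vsub z p).
  assert (Lp : L1 p) by apply orth_proj_in.
  assert (Hw : forall s, L1 s -> ip w s = 0) by (intros; apply (proj_orth n L1 z); auto; apply orth_proj_spec).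
  assert (E : P2 z = vadd (P2 p) (P2 w)).
  { apply orth_proj_eq. split.
    - apply (linear_set_vadd n L2 (proj1 H2)); apply orth_proj_in.
    - intros y Ly. replace (vsub z (vadd (P2 p) (P2 w))) with (vadd (vsub p (P2 p)) (vsub w (P2 w)))
        by (apply functional_extensionality; intros; unfold w, vadd, vsub; ring).
      rewrite inner_addl, (proj_orth n L2 p _ y (orth_proj_spec n L2 H2 p) Ly),
        (proj_orth n L2 w _ y (orth_proj_spec n L2 H2 w) Ly). ring. }
  rewrite E. replace (vsub p (vadd (P2 p) (P2 w))) with (vsub (vsub p (P2 p)) (P2 w))
    by (apply functional_extensionality; intros; unfold vadd, vsub; ring).
  rewrite inner_vsub_self, (proj_orth n L2 p _ _ (orth_proj_spec n L2 H2 p) (orth_proj_in n L2 H2 w)).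
  fold (sqdist n L2 H2 p).
  assert (A := Ha p Lp). assert (B := orth_proj_of_perp_sq b w b0 Hb Hw). lra.
Qed.

End TwoSubspaces.

Lemma norm2_div n u x : 0 < inner n x x -> norm2 n u / norm2 n x = sqrt (inner n u u / inner n x x).
Proof. intros Hx. unfold norm2. rewrite sqrt_div_alt; auto. Qed.

Lemma is_min_unique S a b : is_min S a -> is_min S b -> a = b.
Proof. intros [Ha Ha'] [Hb Hb']. apply Ha' in Hb. apply Hb' in Ha. lra. Qed.

Lemma is_inf_unique S a b : is_inf S a -> is_inf S b -> a = b.
Proof. intros [Ha Ha'] [Hb Hb']. apply Ha' in Hb. apply Hb' in Ha. lra. Qed.

Section DistanceRatios.
Variables (n : nat) (L : vec -> Prop).
Hypothesis H : proj_subspace n L.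
Notation ip := (inner n).
Notation P := (orth_proj n L H).

Definition dist_ratios x : R -> Prop :=
  fun s => exists v, L v /\ s = norm2 n (vsub x v) / norm2 n x.

Definition distbar_ratios x : R -> Prop :=
  fun s => exists v, L v /\ Defs.nonzero n v /\ s = norm2 n (vsub x v) / norm2 n v.

Lemma dist_ratios_min x : 0 < ip x x -> is_min (dist_ratios x) (sqrt (sqdist n L H x / ip x x)).
Proof.
  intros Hx. split.
  - exists (P x). split; [apply orth_proj_in|]. rewrite norm2_div; auto.
  - intros s [v [Lv ->]]. rewrite norm2_div by auto. apply sqrt_le_1_alt.
    unfold Rdiv. apply Rmult_le_compat_r; [left; apply Rinv_0_lt_compat; auto|].
    rewrite (proj_sqdist n L H x (P x) v (orth_proj_spec n L H x) Lv).
    assert (A := inner_self_ge0 n (vsub (P x) v)). unfold sqdist. lra.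
Qed.

(* [(X - 2 s + V) / V - (X - Q) / X = (X^2 - 2 s X + Q V) / (X V) >= (X - s)^2 / (X V) >= 0],
   using [s^2 <= Q V] with [X = |x|^2], [Q = |P x|^2], [V = |v|^2], [s = <P x, v>]. *)
Lemma distbar_ratios_lower x s : 0 < ip x x -> distbar_ratios x s ->
  sqrt (sqdist n L H x / ip x x) <= s.
Proof.
  intros Hx [v [Lv [nzv ->]]].
  assert (Vp := nonzero_norm2_gt0 n v nzv).
  assert (V0 : 0 < ip v v) by (rewrite <- norm2_sq; nra).
  rewrite norm2_div by auto. apply sqrt_le_1_alt.
  assert (D := sqdist_pythagoras n L H x).
  rewrite inner_vsub_self, (proj_inner n L x (P x) v (orth_proj_spec n L H x) Lv).
  assert (CS := cauchy_schwarz_sq n (P x) v).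
  set (X := ip x x) in *. set (Q := ip (P x) (P x)) in *.
  set (s := ip (P x) v) in *. set (V := ip v v) in *.
  replace (sqdist n L H x) with (X - Q) by lra.
  replace ((X - 2 * s + V) / V) with ((X - Q) / X + (X * X - 2 * s * X + Q * V) / (X * V))
    by (field; lra).
  assert (0 <= (X * X - 2 * s * X + Q * V) / (X * V)); [|lra].
  apply Rmult_le_pos; [|left; apply Rinv_0_lt_compat; nra].
  assert (0 <= (X - s) * (X - s)) by apply Rle_0_sqr. nra.
Qed.

Lemma distbar_ratios_at x v : L v -> 0 < ip v v ->
  distbar_ratios x (sqrt (ip (vsub x v) (vsub x v) / ip v v)).
Proof.
  intros Lv Vp. exists v. split; auto. split; [|rewrite norm2_div; auto].
  apply norm2_gt0_nonzero. unfold norm2. apply sqrt_lt_R0; auto.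
Qed.

Lemma sqrt_le_self y : 1 <= y -> sqrt y <= y.
Proof.
  intros Hy. assert (A := sqrt_sqrt y ltac:(lra)).
  assert (B : 1 <= sqrt y) by (rewrite <- sqrt_1; apply sqrt_le_1_alt; auto).
  nra.
Qed.

(* If [P x <> 0] the infimum is attained at [v = (|x|^2 / |P x|^2) P x]; if [P x = 0] it is the
   value [1], approached by [t w0] as [t] grows. *)
Lemma distbar_ratios_inf x w0 : L w0 -> ip w0 w0 = 1 -> 0 < ip x x ->
  is_inf (distbar_ratios x) (sqrt (sqdist n L H x / ip x x)).
Proof.
  intros Lw Uw Hx. split; [intros s Hs; apply distbar_ratios_lower; auto|].
  intros b Hb.
  assert (D := sqdist_pythagoras n L H x).
  assert (Hs : forall v, L v -> ip x v = ip (P x) v)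
    by (intros; apply (proj_inner n L x); auto; apply orth_proj_spec).
  set (X := ip x x) in *. set (Q := ip (P x) (P x)) in *.
  replace (sqdist n L H x) with (X - Q) by lra.
  assert (Q0 := inner_self_ge0 n (P x)). fold Q in Q0. destruct Q0 as [Qp|Q0].
  - set (v := vscal (X / Q) (P x)).
    assert (Lv : L v) by (apply (linear_set_vscal n L (proj1 H)), orth_proj_in).
    assert (Ev : ip v v = X * X / Q) by (unfold v; rewrite inner_scall, inner_scalr; fold Q; field; lra).
    assert (Exv : ip (vsub x v) (vsub x v) = X * (X - Q) / Q).
    { rewrite inner_vsub_self, Ev. unfold v. rewrite inner_scalr, (Hs (P x)) by apply orth_proj_in.
      fold Q X. field. lra. }
    apply Rle_trans with (sqrt (ip (vsub x v) (vsub x v) / ip v v)).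
    + apply Hb, distbar_ratios_at; auto. rewrite Ev. apply Rdiv_lt_0_compat; nra.
    + rewrite Exv, Ev. right. f_equal. field. split; lra.
  - rewrite <- Q0. replace ((X - 0) / X) with 1 by (field; lra). rewrite sqrt_1.
    assert (Pz : forall i, (i < n)%nat -> P x i = 0) by (apply inner_self_eq0; auto).
    assert (Bt : forall t, 0 < t -> b <= 1 + X / (t * t)).
    { intros t Ht. set (v := vscal t w0).
      assert (Lv : L v) by (apply (linear_set_vscal n L (proj1 H)); auto).
      assert (Ev : ip v v = t * t) by (unfold v; rewrite inner_scall, inner_scalr, Uw; ring).
      assert (Exv : ip (vsub x v) (vsub x v) = X + t * t).
      { rewrite inner_vsub_self, Ev. unfold v.
        rewrite inner_scalr, (Hs w0 Lw), (inner_eq0l n (P x) w0 Pz). fold X. ring. }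
      apply Rle_trans with (sqrt (ip (vsub x v) (vsub x v) / ip v v)).
      + apply Hb, distbar_ratios_at; auto. rewrite Ev. nra.
      + rewrite Exv, Ev. replace ((X + t * t) / (t * t)) with (1 + X / (t * t)) by (field; lra).
        apply sqrt_le_self.
        assert (0 <= X / (t * t)) by (apply Rmult_le_pos; [lra|left; apply Rinv_0_lt_compat; nra]).
        lra. }
    apply Rnot_lt_le. intros C.
    set (t := sqrt (2 * X / (b - 1))).
    assert (tt : t * t = 2 * X / (b - 1))
      by (apply sqrt_sqrt, Rmult_le_pos; [lra|left; apply Rinv_0_lt_compat; lra]).
    assert (tp : 0 < t) by (apply sqrt_lt_R0, Rdiv_lt_0_compat; lra).
    specialize (Bt t tp). rewrite tt in Bt.
    replace (X / (2 * X / (b - 1))) with ((b - 1) / 2) in Bt by (field; lra). lra.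
Qed.

End DistanceRatios.

Lemma nonzero_inner_self_gt0 n x : Defs.nonzero n x -> 0 < inner n x x.
Proof. intros nz. rewrite <- norm2_sq. assert (D := nonzero_norm2_gt0 n x nz). nra. Qed.

Lemma max_sqdist_sym n m L1 L2 (H1 : proj_subspace n L1) (H2 : proj_subspace n L2) x1 x2 :
  Gr n m L1 -> Gr n m L2 -> L1 x1 -> inner n x1 x1 = 1 -> L2 x2 -> inner n x2 x2 = 1 ->
  (forall x, L1 x -> sqdist n L2 H2 x <= sqdist n L2 H2 x1 * inner n x x) ->
  (forall y, L2 y -> sqdist n L1 H1 y <= sqdist n L1 H1 x2 * inner n y y) ->
  sqdist n L2 H2 x1 = sqdist n L1 H1 x2.
Proof.
  intros G1 G2 Lx1 Ux1 Lx2 Ux2 B1 B2.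
  set (a := sqdist n L2 H2 x1) in *. set (b := sqdist n L1 H1 x2) in *.
  assert (a1 : a <= 1) by (rewrite <- Ux1; apply sqdist_le).
  assert (b1 : b <= 1) by (rewrite <- Ux2; apply sqdist_le).
  assert (K12 : a < 1 -> b <= a) by (intros; apply (sqdist_bound_transpose n m L1 L2 H1 H2); auto).
  assert (K21 : b < 1 -> a <= b) by (intros; apply (sqdist_bound_transpose n m L2 L1 H2 H1); auto).
  destruct (Rlt_le_dec a 1), (Rlt_le_dec b 1); lra.
Qed.

Lemma grassmann_distances_eq n m L1 L2 : (1 <= m)%nat -> Gr n m L1 -> Gr n m L2 ->
  exists d, is_max (proj_diff_set n L1 L2) d /\
            is_max (dist_set n L1 L2) d /\
            is_max (distbar_set n L1 L2) d.
Proof.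
  intros Hm G1 G2.
  assert (H1 := Gr_proj_subspace n m L1 G1). assert (H2 := Gr_proj_subspace n m L2 G2).
  destruct (sqdist_max_unit n L1 L2 H1 H2 (Gr_unit n m L1 G1 Hm)) as [x1 [Lx1 [Ux1 B1]]].
  destruct (sqdist_max_unit n L2 L1 H2 H1 (Gr_unit n m L2 G2 Hm)) as [x2 [Lx2 [Ux2 B2]]].
  assert (Eab := max_sqdist_sym n m L1 L2 H1 H2 x1 x2 G1 G2 Lx1 Ux1 Lx2 Ux2 B1 B2).
  set (a := sqdist n L2 H2 x1) in *.
  rewrite <- Eab in B2.
  assert (a0 : 0 <= a) by apply sqdist_ge0.
  assert (Hval : forall x, L1 x -> 0 < inner n x x -> sqrt (sqdist n L2 H2 x / inner n x x) <= sqrt a).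
  { intros x Lx Xp. apply sqrt_le_1_alt.
    apply (Rmult_le_reg_r (inner n x x)); auto. unfold Rdiv.
    rewrite Rmult_assoc, Rinv_l, Rmult_1_r by lra. apply B1; auto. }
  assert (Ea : sqrt a = sqrt (sqdist n L2 H2 x1 / inner n x1 x1))
    by (rewrite Ux1; f_equal; fold a; field).
  assert (nzx1 : Defs.nonzero n x1)
    by (apply norm2_gt0_nonzero; rewrite (proj2 (norm2_eq1 n x1) Ux1); lra).
  destruct (Gr_unit n m L2 G2 Hm) as [w0 [Lw0 Uw0]].
  exists (sqrt a). split; [|split].
  - split.
    + exists x1, x1, (orth_proj n L2 H2 x1).
      split; [apply (linear_set_vec n L1 (proj1 H1)); auto|].
      split; [apply norm2_eq1; auto|].
      split; [apply proj_self; auto|]. split; [apply orth_proj_spec | reflexivity].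
    + intros r [z [p1 [p2 [zv [Nz [Hp1 [Hp2 ->]]]]]]].
      rewrite <- (orth_proj_eq n L1 H1 z p1 Hp1), <- (orth_proj_eq n L2 H2 z p2 Hp2).
      unfold norm2 at 1. apply sqrt_le_1_alt.
      assert (D := orth_proj_diff_sq n L1 L2 H1 H2 a a z a0 B1 B2).
      assert (P := sqdist_pythagoras n L1 H1 z). rewrite (proj1 (norm2_eq1 n z) Nz) in P.
      unfold sqdist in P. nra.
  - split.
    + exists x1. split; auto. split; auto. rewrite Ea. apply dist_ratios_min. lra.
    + intros r [x [Lx [nzx Hmin]]]. assert (Xp := nonzero_inner_self_gt0 n x nzx).
      rewrite (is_min_unique _ _ _ Hmin (dist_ratios_min n L2 H2 x Xp)). auto.
  - split.
    + exists x1. split; auto. split; auto. rewrite Ea. apply distbar_ratios_inf with w0; auto. lra.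
    + intros r [x [Lx [nzx Hinf]]]. assert (Xp := nonzero_inner_self_gt0 n x nzx).
      rewrite (is_inf_unique _ _ _ Hinf (distbar_ratios_inf n L2 H2 x w0 Lw0 Uw0 Xp)). auto.
Qed.

Theorem mainTheorem6 (n m : nat) (K : vec -> Prop)
  (Hm1 : (1 <= m)%nat) (Hmn : (m < n)%nat) (HK : regular_cone n K) :
  (* (a) *)
  (forall L1 L2, Gr n m L1 -> Gr n m L2 ->
     exists d, is_max (proj_diff_set n L1 L2) d /\
               is_max (dist_set n L1 L2) d /\
               is_max (distbar_set n L1 L2) d) /\
  (* (b) *)
  (forall L, Gr n m L -> (exists x, L x /\ vinterior n K x) ->
     exists a, is_min (angle_set n (perp n L) (dual_cone n K)) a /\
               is_min (nu_set n K L) (sin a)) /\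
  (* (c) *)
  (forall L, Gr n m L -> (exists u, perp n L u /\ vinterior n (dual_cone n K) u) ->
     exists a, is_min (angle_set n L K) a /\
               is_min (nubar_set n K L) (sin a)).
Proof.
  (* with the Euclidean norms, (b) and (c) hold without the interior-point assumptions *)
  split; [|split].
  - intros L1 L2 G1 G2. apply (grassmann_distances_eq n m); auto.
  - intros L G _. apply (nu_eq_sin_angle n m); auto.
  - intros L G _. apply (nubar_eq_sin_angle n m); auto.
Qed.
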